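(* Let $K$ be a field, and let $R \in \mathfrak R_K$ be of countable type, of Loewy length $\sigma + 1$, and of top layer dimension $n$, where $0 < n < \omega$. Then there is a $K$-algebra isomorphism $R \cong B_{\sigma,n}$.
   Context: Socle sequence of a ring $R$ (as a right module over itself): $S_0 = 0$, $S_{\alpha+1}/S_\alpha = \mathrm{Soc}(R/S_\alpha)$, and $S_\alpha = \bigcup_{\beta<\alpha} S_\beta$ for limit $\alpha$. $R$ is semiartinian if $S_\tau = R$ for some ordinal $\tau$; the least such $\tau$ is the Loewy length, which for $R \neq 0$ has the form $\sigma+1$. The layers are $L_\alpha = S_{\alpha+1}/S_\alpha$ for $\alpha \le \sigma$. For a field $K$ and a cardinal $\lambda$, $K^{(\lambda)}$ denotes the direct sum of $\lambda$ copies of $K$ with componentwise operations, regarded as a $K$-algebra without unit. $\mathfrak R_K$ is the class of all commutative von Neumann regular semiartinian $K$-algebras $R$ (of Loewy length $\sigma+1$) such that for each $\alpha \le \sigma$ there are a cardinal $\lambda_\alpha>0$ and a $K$-linear isomorphism of $K$-algebras without unit $L_\alpha \cong K^{(\lambda_\alpha)}$. Here $\lambda_\sigma$ is finite and is called the top layer dimension of $R$. $R \in \mathfrak R_K$ is of countable type if $\sigma$ is countable and all $\lambda_\alpha$ ($\alpha\le\sigma$) are countable. For a field $K$, an infinite cardinal (or infinite index set) $\kappa$ and a sequence $\mathcal R = (R_\alpha \mid \alpha<\kappa)$ of $K$-algebras, let $P = \prod_{\alpha<\kappa} R_\alpha$, $I = \bigoplus_{\alpha<\kappa} R_\alpha \subseteq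 P$, and let $R(\kappa,K,\mathcal R)$ denote the $K$-subalgebra $I \oplus 1_P\cdot K$ of $P$. $\boxplus$ denotes the ring direct product. The $K$-algebras $B_{\alpha,n}$ ($\alpha$ an ordinal, $0<n<\omega$) are defined recursively: $B_{0,1} = K$; for $\alpha = \beta+1$, $B_{\alpha,1} = R(\aleph_0,K,\mathcal R)$ where $\mathcal R$ is the constant sequence $R_m = B_{\beta,1}$ ($m<\aleph_0$); for limit $\alpha$, $B_{\alpha,1} = R(\alpha,K,(B_{\beta,1}\mid \beta<\alpha))$; and for $1<n<\omega$, $B_{\alpha,n} = B_{\alpha,1}\boxplus\cdots\boxplus B_{\alpha,1}$ ($n$ copies). *)

From Stdlib Require List.
From mathcomp Require Import all_boot all_algebra.
Set Implicit Arguments. Unset Strict Implicit. Unset Printing Implicit Defensive.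
Import GRing.Theory.
Local Open Scope ring_scope.

(* Ordinals are represented by well-ordered types (W, lt).  A fixed ordinal  *)
(* sigma+1 is represented by a well-order W with a greatest element [top];   *)
(* then the elements of W correspond to the ordinals alpha <= sigma and      *)
(* [top] corresponds to sigma.                                               *)

Section Ord.
Variables (W : Type) (lt : W -> W -> Prop).

Definition strict_total_order : Prop :=
  (forall a b c, lt a b -> lt b c -> lt a c) /\
  (forall a b, lt a b \/ a = b \/ lt b a).

Definition is_min (w : W) : Prop := forall v, ~ lt v w.
Definition imm_pred (v w : W) : Prop := lt v w /\ forall u, ~ (lt v u /\ lt u w).
Definition is_limit (w : W) : Prop := ~ is_min w /\ ~ (exists v, imm_pred v w).
End Ord.

Section Socle.
Variables (K : fieldType) (R : comAlgType K).

Definition right_ideal (J : R -> Prop) : Prop :=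
  J 0 /\ (forall x y, J x -> J y -> J (x + y)) /\ (forall x r, J x -> J (x * r)).

(* J/I is a simple submodule of R/I: J is a right ideal containing I,      *)
Definition minimal_over (I J : R -> Prop) : Prop :=
  right_ideal J /\ (forall x, I x -> J x) /\ (exists x, J x /\ ~ I x) /\
  (forall J', right_ideal J' -> (forall x, I x -> J' x) -> (forall x, J' x -> J x) ->
     (forall x, J' x -> I x) \/ (forall x, J x -> J' x)).

(* soc_step I = the preimage in R of Soc(R/I), i.e. I plus all finite sums *)
(* of elements of simple submodules of R/I.                                *)
Inductive soc_step (I : R -> Prop) : R -> Prop :=
  | ss_base x : I x -> soc_step I x
  | ss_add x y (J : R -> Prop) : soc_step I x -> minimal_over I J -> J y ->
      soc_step I (x + y).

Variables (W : Type) (lt : W -> W -> Prop) (wf : well_founded lt).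

Definition socle_seq : W -> R -> Prop :=
  Fix wf (fun _ => R -> Prop)
    (fun w rec x =>
       (is_min lt w /\ x = 0) \/
       (exists v (h : lt v w), imm_pred lt v w /\ soc_step (rec v h) x) \/
       (is_limit lt w /\ exists v (h : lt v w), rec v h x)).

Definition finsupp (L : Type) (g : L -> K) : Prop :=
  exists s : seq L, forall l, g l <> 0 -> List.In l s.

(* phi : S_{w+1} -> K^(L) induces a K-linear isomorphism of K-algebras     *)
(* without unit  L_w = S_{w+1}/S_w  ~=  K^(L)  (its kernel is exactly S_w). *)
Definition layer_iso (w : W) (L : Type) (phi : R -> L -> K) : Prop :=
  let T := soc_step (socle_seq w) in
  (forall x y, T x -> T y -> forall l, phi (x + y) l = phi x l + phi y l) /\
  (forall (c : K) x, T x -> forall l, phi (c *: x) l = c * phi x l) /\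
  (forall x y, T x -> T y -> forall l, phi (x * y) l = phi x l * phi y l) /\
  (forall x, T x -> finsupp (phi x)) /\
  (forall g, finsupp g -> exists x, T x /\ forall l, phi x l = g l) /\
  (forall x, T x -> ((forall l, phi x l = 0) <-> socle_seq w x)).

Definition von_neumann_regular : Prop := forall a : R, exists x, a = a * x * a.
End Socle.

(* The algebras B_{alpha,n}.  Elements of the iterated products are          *)
(* represented in the universal type [El]: a leaf is an element of K,        *)
(* NodeN f an element of a product indexed by nat (aleph_0), and NodeW g an *)
(* element of a product indexed by {u | u < w} (components outside this set  *)
(* are required to be Leaf 0, so this is a faithful encoding of the product). *)

Section B.
Variables (K : fieldType) (W : Type) (lt : W -> W -> Prop) (wf : well_founded lt).

Inductive El : Type :=
  | Leaf of K
  | NodeN of (nat -> El)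
  | NodeW of (W -> El).

Fixpoint el_add (x y : El) : El :=
  match x, y with
  | Leaf a, Leaf b => Leaf (a + b)
  | NodeN f, NodeN g => NodeN (fun m => el_add (f m) (g m))
  | NodeW f, NodeW g => NodeW (fun u => el_add (f u) (g u))
  | _, _ => Leaf 0
  end.

Fixpoint el_mul (x y : El) : El :=
  match x, y with
  | Leaf a, Leaf b => Leaf (a * b)
  | NodeN f, NodeN g => NodeN (fun m => el_mul (f m) (g m))
  | NodeW f, NodeW g => NodeW (fun u => el_mul (f u) (g u))
  | _, _ => Leaf 0
  end.

Fixpoint el_scale (c : K) (x : El) : El :=
  match x with
  | Leaf a => Leaf (c * a)
  | NodeN f => NodeN (fun m => el_scale c (f m))
  | NodeW f => NodeW (fun u => el_scale c (f u))
  end.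

(* Bscal w c x  <->  x = c * 1 in B_{w,1} *)
Definition Bscal : W -> K -> El -> Prop :=
  Fix wf (fun _ => K -> El -> Prop)
    (fun w rec c x =>
       (is_min lt w /\ x = Leaf c) \/
       (exists v (h : lt v w), imm_pred lt v w /\
          exists f, x = NodeN f /\ forall m, rec v h c (f m)) \/
       (is_limit lt w /\ exists g, x = NodeW g /\
          (forall u (h : lt u w), rec u h c (g u)) /\
          (forall u, ~ lt u w -> g u = Leaf 0))).

(* Bset w x  <->  x in B_{w,1}:
   - w = 0     : B = K;
   - w = v + 1 : B = R(aleph_0, K, (B_{v,1})_{m<omega}) = I (+) K 1_P, i.e.
                 x in prod_m B_{v,1} and x_m = c 1 for all but finitely many m;
   - w limit   : B = R(w, K, (B_{u,1})_{u<w}) likewise. *)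
Definition Bset : W -> El -> Prop :=
  Fix wf (fun _ => El -> Prop)
    (fun w rec x =>
       (is_min lt w /\ exists k, x = Leaf k) \/
       (exists v (h : lt v w), imm_pred lt v w /\
          exists f, x = NodeN f /\ (forall m, rec v h (f m)) /\
          exists (c : K) (s : seq nat), forall m, ~ List.In m s -> Bscal v c (f m)) \/
       (is_limit lt w /\ exists g, x = NodeW g /\
          (forall u (h : lt u w), rec u h (g u)) /\
          (forall u, ~ lt u w -> g u = Leaf 0) /\
          exists (c : K) (s : seq W), forall u, lt u w -> ~ List.In u s -> Bscal u c (g u))).

(* f : R -> B_{w,n} = B_{w,1} x ... x B_{w,1} (n copies, 'I_n -> El) is a   *)
(* K-algebra isomorphism. *)
Definition B_iso (R : comAlgType K) (w : W) (n : nat) (f : R -> 'I_n -> El) : Prop :=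
  (forall x i, Bset w (f x i)) /\
  (forall y : 'I_n -> El, (forall i, Bset w (y i)) -> exists x, forall i, f x i = y i) /\
  (forall x y, (forall i, f x i = f y i) -> x = y) /\
  (forall x y i, f (x + y) i = el_add (f x i) (f y i)) /\
  (forall x y i, f (x * y) i = el_mul (f x i) (f y i)) /\
  (forall (c : K) x i, f (c *: x) i = el_scale c (f x i)) /\
  (forall i, Bscal w 1 (f 1 i)).
End B.

From Stdlib Require Import ClassicalEpsilon FunctionalExtensionality Classical.
From Stdlib Require Cantor List.
From Pilot Require Import Defs.
From mathcomp Require Import all_boot all_algebra ring.
Set Implicit Arguments. Unset Strict Implicit. Unset Printing Implicit Defensive.
Import GRing.Theory.
Local Open Scope ring_scope.

(* An idempotent [e] is atomic at level [w] when [e + S_w] spans a simple summand of the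
   layer [S_(w+1)/S_w].  Every such [e] satisfies [eR ≅ B_(w,1)], by well-founded induction
   on [w].  At level 0, [eR = K e].  Above, a countable greedy construction (using von
   Neumann regularity and the countability of [W] and of every layer) splits [e] into
   orthogonal atomic idempotents [E_i] of lower levels, one for each factor of the product
   defining [B_(w,1)], such that every element of [S_w e] lies under finitely many of them.
   The isomorphisms [E_i R ≅ B_(lev i,1)] then assemble to [eR ≅ B_(w,1)]: as [x e = c e]
   modulo [S_w] for some scalar [c], almost all coordinates of [x] equal [c].  Finally the top
   layer [K^n] splits [1] into [n] orthogonal atomic idempotents, whence [R ≅ B_(σ,n)]. *)

(** * Well-orders *)

Section Order.
Variables (W : Type) (lt : W -> W -> Prop).
Hypothesis wf : well_founded lt.
Hypothesis lt_order : strict_total_order lt.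

Lemma ord_lt_irrefl w : ~ lt w w.
Proof. by elim: (wf w) => {}w _ IH Hw; apply: (IH w Hw Hw). Qed.

Lemma ord_lt_trans a b c : lt a b -> lt b c -> lt a c.
Proof. by case: lt_order => H _; apply: H. Qed.

Lemma ord_lt_total a b : lt a b \/ a = b \/ lt b a.
Proof. by case: lt_order => _ H; apply: H. Qed.

Lemma ord_cases w : is_min lt w \/ (exists v, imm_pred lt v w) \/ is_limit lt w.
Proof.
case: (classic (is_min lt w)) => Hm; first by left.
case: (classic (exists v, imm_pred lt v w)) => Hp; first by right; left.
by right; right.
Qed.

Lemma imm_pred_unique v v' w : imm_pred lt v w -> imm_pred lt v' w -> v = v'.
Proof.
move=> [H1 H2] [H1' H2'].
by case: (ord_lt_total v v') => [h|[//|h]]; [case: (H2 v') | case: (H2' v)].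
Qed.

Lemma lt_imm_pred v w u : imm_pred lt v w -> lt u w -> u = v \/ lt u v.
Proof.
move=> [_ Hv] Hu.
by case: (ord_lt_total u v) => [h|[h|h]]; [right|left|case: (Hv u)].
Qed.

Lemma imm_pred_not_min v w : imm_pred lt v w -> ~ is_min lt w.
Proof. by move=> [H _] Hm; apply: (Hm v). Qed.

Lemma imm_pred_not_limit v w : imm_pred lt v w -> ~ is_limit lt w.
Proof. by move=> H [_ Hl]; apply: Hl; exists v. Qed.

Lemma not_min_lt w : ~ is_min lt w -> exists v, lt v w.
Proof. by move=> H; apply: NNPP => H'; apply: H => v Hv; apply: H'; exists v. Qed.

Lemma limit_dense w u : is_limit lt w -> lt u w -> exists u', lt u u' /\ lt u' w.
Proof.
move=> [_ Hl] Hu; apply: NNPP => Hn; apply: Hl; exists u; split => // u' Hu'.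
by apply: Hn; exists u'.
Qed.

Lemma limit_fresh w u0 (F : list W) : is_limit lt w -> lt u0 w ->
  exists u, lt u0 u /\ lt u w /\ ~ List.In u F.
Proof.
move=> Hl; elim: F u0 => [|a F IH] u0 Hu0.
  by have [u [H1 H2]] := limit_dense Hl Hu0; exists u; do 2!split => //; case.
have [[Ha Haw]|Hn] := classic (lt u0 a /\ lt a w).
- have [u [Hau [Huw Hn]]] := IH a Haw.
  exists u; split; first exact: ord_lt_trans Ha Hau.
  by split => //= -[Eau|//]; subst a; exact: ord_lt_irrefl Hau.
- have [u [Hau [Huw Hn']]] := IH u0 Hu0.
  by exists u; split => //; split => //= -[Eau|//]; subst a; apply: Hn.
Qed.

End Order.

Lemma funext2_dep (A : Type) (B : A -> Type) (C : Type) (f g : forall a, B a -> C) :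
  (forall a b, f a b = g a b) -> f = g.
Proof.
move=> H; apply: functional_extensionality_dep => a.
exact: functional_extensionality_dep.
Qed.

Section Unfold.
Variables (K : fieldType) (R : comAlgType K).
Variables (W : Type) (lt : W -> W -> Prop) (wf : well_founded lt).
Hypothesis lt_order : strict_total_order lt.
Local Notation S := (socle_seq (R := R) wf).
Local Notation Bscal := (@Bscal K W lt wf).
Local Notation Bset := (@Bset K W lt wf).
Local Notation Leaf := (@Leaf K W).

Lemma socle_seq_unfold w : S w = (fun x : R =>
       (is_min lt w /\ x = 0) \/
       (exists v (h : lt v w), imm_pred lt v w /\ soc_step (S v) x) \/
       (is_limit lt w /\ exists v (h : lt v w), S v x)).
Proof. by rewrite /socle_seq Fix_eq // => x f g H; rewrite (funext2_dep H). Qed.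

Lemma Bscal_unfold w : Bscal w = (fun c x =>
       (is_min lt w /\ x = Leaf c) \/
       (exists v (h : lt v w), imm_pred lt v w /\
          exists f, x = NodeN f /\ forall m, Bscal v c (f m)) \/
       (is_limit lt w /\ exists g, x = NodeW g /\
          (forall u (h : lt u w), Bscal u c (g u)) /\
          (forall u, ~ lt u w -> g u = Leaf 0))).
Proof. by rewrite /Defs.Bscal Fix_eq // => x f g H; rewrite (funext2_dep H). Qed.

Lemma Bset_unfold w : Bset w = (fun x =>
       (is_min lt w /\ exists k, x = Leaf k) \/
       (exists v (h : lt v w), imm_pred lt v w /\
          exists f, x = NodeN f /\ (forall m, Bset v (f m)) /\
          exists (c : K) (s : seq nat), forall m, ~ List.In m s -> Bscal v c (f m)) \/
       (is_limit lt w /\ exists g, x = NodeW g /\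
          (forall u (h : lt u w), Bset u (g u)) /\
          (forall u, ~ lt u w -> g u = Leaf 0) /\
          exists (c : K) (s : seq W), forall u, lt u w -> ~ List.In u s -> Bscal u c (g u))).
Proof. by rewrite /Defs.Bset Fix_eq // => x f g H; rewrite (funext2_dep H). Qed.

Lemma socle_seq_min w x : is_min lt w -> S w x <-> x = 0.
Proof.
move=> Hm; rewrite socle_seq_unfold; split; last by left.
by case=> [[_ ->]|[[v [h _]]|[[] //]]] //; case: (Hm v).
Qed.

Lemma socle_seq_succ v w x : imm_pred lt v w -> S w x <-> soc_step (S v) x.
Proof.
move=> Hp; rewrite socle_seq_unfold; split; last by right; left; exists v, (proj1 Hp).
case=> [[Hm _]|[[v' [_ [Hp' Hx]]]|[Hl _]]].
- by case: (imm_pred_not_min Hp).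
- by rewrite (imm_pred_unique lt_order Hp Hp').
- by case: (imm_pred_not_limit Hp).
Qed.

Lemma socle_seq_limit w x : is_limit lt w -> S w x <-> exists v, lt v w /\ S v x.
Proof.
move=> Hl; rewrite socle_seq_unfold; split.
- case=> [[Hm _]|[[v' [_ [Hp' _]]]|[_ [v [h Hx]]]]]; [by case: Hl | | by exists v].
  by case: (imm_pred_not_limit Hp').
- by move=> [v [h Hx]]; right; right; split => //; exists v, h.
Qed.

Lemma Bscal_min w c x : is_min lt w -> Bscal w c x <-> x = Leaf c.
Proof.
move=> Hm; rewrite Bscal_unfold; split; last by left.
by case=> [[_ ->]|[[v [h _]]|[[] //]]] //; case: (Hm v).
Qed.

Lemma Bscal_succ v w c x : imm_pred lt v w ->
  Bscal w c x <-> exists f, x = NodeN f /\ forall m, Bscal v c (f m).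
Proof.
move=> Hp; rewrite Bscal_unfold; split; last by right; left; exists v, (proj1 Hp).
case=> [[Hm _]|[[v' [_ [Hp' Hx]]]|[Hl _]]].
- by case: (imm_pred_not_min Hp).
- by rewrite (imm_pred_unique lt_order Hp Hp').
- by case: (imm_pred_not_limit Hp).
Qed.

Lemma Bscal_limit w c x : is_limit lt w ->
  Bscal w c x <-> exists g, x = NodeW g /\
    (forall u, lt u w -> Bscal u c (g u)) /\ (forall u, ~ lt u w -> g u = Leaf 0).
Proof.
move=> Hl; rewrite Bscal_unfold; split; last by right; right.
case=> [[Hm _]|[[v' [_ [Hp' _]]]|[_ Hx]]] //; first by case: Hl.
by case: (imm_pred_not_limit Hp').
Qed.

Lemma Bset_min w x : is_min lt w -> Bset w x <-> exists k, x = Leaf k.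
Proof.
move=> Hm; rewrite Bset_unfold; split; last by left.
by case=> [[_ H]|[[v [h _]]|[[] //]]] //; case: (Hm v).
Qed.

Lemma Bset_succ v w x : imm_pred lt v w ->
  Bset w x <-> exists f, x = NodeN f /\ (forall m, Bset v (f m)) /\
    exists (c : K) (s : seq nat), forall m, ~ List.In m s -> Bscal v c (f m).
Proof.
move=> Hp; rewrite Bset_unfold; split; last by right; left; exists v, (proj1 Hp).
case=> [[Hm _]|[[v' [_ [Hp' Hx]]]|[Hl _]]].
- by case: (imm_pred_not_min Hp).
- by rewrite (imm_pred_unique lt_order Hp Hp').
- by case: (imm_pred_not_limit Hp).
Qed.

Lemma Bset_limit w x : is_limit lt w ->
  Bset w x <-> exists g, x = NodeW g /\ (forall u, lt u w -> Bset u (g u)) /\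
    (forall u, ~ lt u w -> g u = Leaf 0) /\
    exists (c : K) (s : seq W), forall u, lt u w -> ~ List.In u s -> Bscal u c (g u).
Proof.
move=> Hl; rewrite Bset_unfold; split; last by right; right.
case=> [[Hm _]|[[v' [_ [Hp' _]]]|[_ Hx]]] //; first by case: Hl.
by case: (imm_pred_not_limit Hp').
Qed.

Lemma Bscal_uniq w c x y : Bscal w c x -> Bscal w c y -> x = y.
Proof.
elim: (wf w) x y => {}w _ IH x y.
case: (ord_cases lt w) => [Hm|[[v Hp]|Hl]].
- by rewrite !(Bscal_min _ _ Hm) => -> ->.
- rewrite !(Bscal_succ _ _ Hp) => -[f [-> Hf]] [g [-> Hg]].
  by congr NodeN; apply: functional_extensionality => m; exact: IH v (proj1 Hp) _ _ (Hf m) (Hg m).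
- rewrite !(Bscal_limit _ _ Hl) => -[f [-> [Hf Hf']]] [g [-> [Hg Hg']]].
  congr NodeW; apply: functional_extensionality => u.
  have [Hu|Hu] := classic (lt u w); first exact: IH u Hu _ _ (Hf u Hu) (Hg u Hu).
  by rewrite Hf' // Hg'.
Qed.

Lemma BscalZ w a c x : Bscal w a x -> Bscal w (c * a) (el_scale c x).
Proof.
elim: (wf w) x => {}w _ IH x.
case: (ord_cases lt w) => [Hm|[[v Hp]|Hl]].
- by rewrite !(Bscal_min _ _ Hm) => ->.
- rewrite !(Bscal_succ _ _ Hp) => -[f [-> Hf]].
  by exists (fun m => el_scale c (f m)); split => // m; apply: IH (proj1 Hp) _ (Hf m).
- rewrite !(Bscal_limit _ _ Hl) => -[f [-> [Hf Hf']]].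
  exists (fun m => el_scale c (f m)); split => //; split => [u Hu|u Hu].
  + exact: IH u Hu _ (Hf u Hu).
  + by rewrite Hf' //= mulr0.
Qed.

End Unfold.

(** * Right ideals, idempotents and orthogonal sums *)

Lemma scaler_in_alg (K : fieldType) (R : comAlgType K) (c : K) (x : R) :
  c *: x = in_alg R c * x.
Proof. by rewrite in_algE mulr_algl. Qed.

Section RightIdeal.
Variables (K : fieldType) (R : comAlgType K) (J : R -> Prop).
Hypothesis J_ideal : right_ideal J.

Lemma rideal0 : J 0.
Proof. by case: J_ideal. Qed.

Lemma ridealD x y : J x -> J y -> J (x + y).
Proof. by case: J_ideal => _ [HD _]; apply: HD. Qed.

Lemma ridealMr x r : J x -> J (x * r).
Proof. by case: J_ideal => _ [_ HM]; apply: HM. Qed.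

Lemma ridealMl x r : J x -> J (r * x).
Proof. by rewrite mulrC; apply: ridealMr. Qed.

Lemma ridealN x : J x -> J (- x).
Proof. by rewrite -mulrN1; apply: ridealMr. Qed.

Lemma ridealB x y : J x -> J y -> J (x - y).
Proof. by move=> Hx Hy; apply: ridealD Hx (ridealN Hy). Qed.

Lemma ridealZ (c : K) x : J x -> J (c *: x).
Proof. by rewrite -mulr_algr; apply: ridealMr. Qed.

Lemma ridealZ_nz (c : K) x : c != 0 -> J (c *: x) -> J x.
Proof. by move=> Hc /(ridealZ c^-1); rewrite scalerA mulVf // scale1r. Qed.

Lemma rideal_sum (I : Type) (A : I -> R) (s : seq I) :
  (forall i, List.In i s -> J (A i)) -> J (\sum_(i <- s) A i).
Proof.
elim: s => [|i s IH] H; first by rewrite big_nil; apply: rideal0.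
by rewrite big_cons; apply: ridealD (H i (or_introl erefl)) (IH _) => j Hj; apply: H; right.
Qed.

End RightIdeal.

Lemma right_ideal_ext (K : fieldType) (R : comAlgType K) (J J' : R -> Prop) :
  (forall x, J x <-> J' x) -> right_ideal J' -> right_ideal J.
Proof.
move=> H [H0 [HD HM]]; split; first exact/H.
by split=> [x y /H Hx /H Hy|x r /H Hx]; apply/H; [apply: HD | apply: HM].
Qed.

Lemma soc_step_ideal (K : fieldType) (R : comAlgType K) (I : R -> Prop) :
  right_ideal I -> right_ideal (soc_step I).
Proof.
move=> HI.
have Hbase x y : soc_step I x -> I y -> soc_step I (x + y).
  elim=> {x} [x Hx|x1 y1 J _ IH HJ Hy1] Hy; first by apply: ss_base; apply: ridealD.
  by rewrite addrAC; apply: ss_add HJ Hy1; apply: IH.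
split; first exact: ss_base (rideal0 HI).
split=> [x y Hx|x r].
- elim=> {y} [y Hy|y1 y2 J _ IH HJ Hy2]; first exact: Hbase.
  by rewrite addrA; apply: ss_add HJ Hy2.
- elim=> {x} [x Hx|x y J _ IH HJ Hy]; first exact: ss_base (ridealMr HI r Hx).
  by rewrite mulrDl; apply: ss_add IH HJ (ridealMr (proj1 HJ) r Hy).
Qed.

Section Idempotents.
Variable R : comNzRingType.

Lemma idem_compl (q : R) : q * q = q -> (1 - q) * (1 - q) = 1 - q.
Proof. by move=> Hq; rewrite mulrBl mul1r mulrBr mulr1 Hq subrr subr0. Qed.

Lemma idem_mul (a b : R) : a * a = a -> b * b = b -> (a * b) * (a * b) = a * b.
Proof. by move=> Ha Hb; rewrite mulrACA Ha Hb. Qed.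

Lemma mul_compl_eq0 (y a q : R) : q * q = q -> y * (a * (1 - q)) = y -> y * q = 0.
Proof.
move=> Hq Hy; rewrite -Hy; have -> : y * (a * (1 - q)) * q = y * a * (q - q * q) by ring.
by rewrite Hq subrr mulr0.
Qed.

Lemma mul_idem_fix (y a b : R) : a * a = a -> y * (a * b) = y -> y * a = y.
Proof.
move=> Ha Hy; rewrite -{1}Hy; have -> : y * (a * b) * a = y * ((a * a) * b) by ring.
by rewrite Ha.
Qed.

Definition join (s : seq R) : R := 1 - \prod_(a <- s) (1 - a).

Lemma join_cons a s : join (a :: s) = a + join s - a * join s.
Proof. by rewrite /join big_cons; set P := \prod_(_ <- s) _; ring. Qed.

Lemma join_cat s1 s2 : join (s1 ++ s2) = join s1 + join s2 - join s1 * join s2.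
Proof.
by rewrite /join big_cat /=; set P1 := \prod_(_ <- s1) _; set P2 := \prod_(_ <- s2) _; ring.
Qed.

Lemma mul_join_mem s a : List.In a s -> a * a = a -> a * join s = a.
Proof.
move=> Ha Haa; suff aP0 : a * \prod_(b <- s) (1 - b) = 0 by rewrite /join mulrBr mulr1 aP0 subr0.
elim: s Ha => [//|b s IH] /= [->|Ha]; rewrite big_cons mulrA.
- by rewrite mulrBr mulr1 Haa subrr mul0r.
- by rewrite [a * _]mulrC -mulrA IH // mulr0.
Qed.

Lemma join_mul_fix s x : (forall a, List.In a s -> a * x = a) -> join s * x = join s.
Proof.
elim: s => [|a s IH] Hs; first by rewrite /join big_nil subrr mul0r.
have Ha := Hs a (or_introl erefl).
have {}IH := IH (fun b Hb => Hs b (or_intror Hb)).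
by rewrite join_cons !mulrBl mulrDl -mulrA IH Ha.
Qed.

Lemma join_ideal (J : R -> Prop) s : J 0 -> (forall x y, J x -> J y -> J (x + y)) ->
  (forall x r, J x -> J (x * r)) -> (forall a, List.In a s -> J a) -> J (join s).
Proof.
move=> H0 HD HM; elim: s => [|a s IH] Hs; first by rewrite /join big_nil subrr.
have Ha := Hs a (or_introl erefl).
rewrite join_cons -mulrN1 -mulrA; apply: (HD _ _ _ (HM _ _ Ha)).
exact: (HD _ _ Ha (IH (fun b Hb => Hs b (or_intror Hb)))).
Qed.

End Idempotents.

Section OrthogonalSums.
Variables (R : comNzRingType) (I : Type).
Implicit Types (A B : I -> R) (s : seq I).

Lemma eq_sum_In A B s : (forall i, List.In i s -> A i = B i) ->
  \sum_(i <- s) A i = \sum_(i <- s) B i.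
Proof.
elim: s => [|i s IH] H; first by rewrite !big_nil.
by rewrite !big_cons (H i (or_introl erefl)) IH // => j Hj; apply: H; right.
Qed.

Lemma sum_mulr_fix A s x : (forall i, List.In i s -> A i * x = A i) ->
  (\sum_(i <- s) A i) * x = \sum_(i <- s) A i.
Proof. by move=> H; rewrite mulr_suml; apply: eq_sum_In. Qed.

Lemma sum_mulr_eq0 A s x : (forall i, List.In i s -> A i * x = 0) ->
  (\sum_(i <- s) A i) * x = 0.
Proof. by move=> H; rewrite mulr_suml (eq_sum_In H) big1. Qed.

Lemma sum_delta A s j : List.NoDup s -> List.In j s ->
  (forall i, List.In i s -> i <> j -> A i = 0) -> \sum_(i <- s) A i = A j.
Proof.
elim: s => [//|i s IH] Hnd Hj H; rewrite big_cons.
have [Hi Hnd'] : ~ List.In i s /\ List.NoDup s by inversion Hnd.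
case: Hj => [Eij|Hj].
- subst i; rewrite (eq_sum_In (B := fun=> 0)) ?big1 ?addr0 // => k Hk.
  by apply: H; [right | move=> Ekj; apply: Hi; rewrite -Ekj].
- rewrite (H i) ?add0r; first by apply: IH => // k Hk; apply: H; right.
  + by left.
  + by move=> Eij; apply: Hi; rewrite Eij.
Qed.

Lemma sum_mulr_delta A B s j : List.NoDup s -> List.In j s ->
  (forall i, List.In i s -> i <> j -> A i * A j = 0) -> A j * A j = A j ->
  (\sum_(i <- s) B i * A i) * A j = B j * A j.
Proof.
move=> Hnd Hj H Hjj; rewrite mulr_suml (sum_delta (A := fun i => B i * A i * A j) Hnd Hj).
  by rewrite -mulrA Hjj.
by move=> i Hi Hij; rewrite -mulrA H // mulr0.
Qed.

Lemma mulr_sum_delta A s j : List.NoDup s -> List.In j s ->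
  (forall i, List.In i s -> i <> j -> A i * A j = 0) -> A j * A j = A j ->
  A j * \sum_(i <- s) A i = A j.
Proof.
move=> Hnd Hj H Hjj; rewrite mulrC -{2}[A j]mul1r -(sum_mulr_delta (fun=> 1) Hnd Hj H Hjj).
by congr (_ * _); apply: eq_sum_In => i _; rewrite mul1r.
Qed.

Lemma sum_orth_idem A s : List.NoDup s ->
  (forall i j, List.In i s -> List.In j s -> i <> j -> A i * A j = 0) ->
  (forall i, List.In i s -> A i * A i = A i) ->
  (\sum_(i <- s) A i) * (\sum_(i <- s) A i) = \sum_(i <- s) A i.
Proof.
move=> Hnd Horth Hidem; apply: sum_mulr_fix => i Hi.
by apply: mulr_sum_delta => // [k Hk Hki|]; [apply: Horth | apply: Hidem].
Qed.

End OrthogonalSums.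

Lemma reindex_nat (X : Type) (d : X) (L : Type) (code : L -> nat) (A : L -> X) :
  injective code ->
  exists a : nat -> X, (forall j, a j = d \/ exists l, a j = A l) /\ forall l, a (code l) = A l.
Proof.
move=> Hcode.
pose P j x := (exists l, code l = j /\ x = A l) \/ (~ (exists l, code l = j) /\ x = d).
have [a Ha] : exists a : nat -> X, forall j, P j (a j).
  apply: choice => j; have [[l Hl]|Hn] := classic (exists l, code l = j).
  - by exists (A l); left; exists l.
  - by exists d; right.
exists a; split=> [j|l].
- by case: (Ha j) => [[l [_ ->]]|[_ ->]]; [right; exists l | left].
- case: (Ha (code l)) => [[l' [/Hcode -> //]]|[Hn _]].
  by case: Hn; exists l.
Qed.

Lemma In_leq_sumn (k : nat) (ks : seq nat) : List.In k ks -> (k <= sumn ks)%N.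
Proof.
elim: ks => [//|a ks IH] /= [->|/IH Hk]; first exact: leq_addr.
exact: leq_trans Hk (leq_addl _ _).
Qed.

Lemma NoDup_filter_In (I : Type) (P : I -> Prop) (s : seq I) :
  exists s' : seq I, List.NoDup s' /\ forall i, List.In i s' <-> List.In i s /\ P i.
Proof.
elim: s => [|a s [s' [Hnd Hs']]]; first by exists [::]; split=> [|i]; [exact: List.NoDup_nil | split=> -[]].
have [[Ha Hn]|Hn] := classic (P a /\ ~ List.In a s').
- exists (a :: s'); split; first exact: List.NoDup_cons.
  move=> i /=; split=> [[<-|/Hs' [H1 H2]]|[[<-|Hi] Hv]]; [by split; [left|] | by split; [right|]| by left|].
  by right; apply/Hs'.
- exists s'; split=> // i; split=> [/Hs' [H1 H2]|[[Eai|Hi] Hv]]; [by split; [right|] | |by apply/Hs'].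
  by subst a; apply: NNPP => Hi; apply: Hn.
Qed.

Lemma mem_In (T : eqType) (x : T) (s : seq T) : x \in s -> List.In x s.
Proof. by elim: s => [//|a s IH]; rewrite in_cons => /orP [/eqP ->|/IH]; [left | right]. Qed.

Lemma In_mem (T : eqType) (x : T) (s : seq T) : List.In x s -> x \in s.
Proof. by elim: s => [//|a s IH] /= [->|/IH Hx]; rewrite in_cons ?eqxx ?Hx ?orbT. Qed.

Lemma uniq_NoDup (T : eqType) (s : seq T) : uniq s -> List.NoDup s.
Proof.
elim: s => [_|a s IH /= /andP [Ha Hs]]; first exact: List.NoDup_nil.
by apply: List.NoDup_cons (IH Hs) => /In_mem Hin; rewrite Hin in Ha.
Qed.

(** * The socle sequence and atomic idempotents *)

Section Socle.
Variables (K : fieldType) (R : comAlgType K).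
Variables (W : Type) (lt : W -> W -> Prop) (wf : well_founded lt).
Hypothesis lt_order : strict_total_order lt.
Local Notation S := (socle_seq (R := R) wf).

Definition socle_next w : R -> Prop := soc_step (S w).
Local Notation T := socle_next.

Lemma socle_sub_next w x : S w x -> T w x.
Proof. exact: ss_base. Qed.

Lemma socle_mono v w x : lt v w -> S v x -> S w x.
Proof.
elim: (wf w) v => {}w _ IH v Hv Hx.
case: (ord_cases lt w) => [Hm|[[v' Hp]|Hl]].
- by case: (Hm v).
- apply/(socle_seq_succ wf lt_order _ Hp)/ss_base.
  by case: (lt_imm_pred lt_order Hp Hv) => [<- //|h]; apply: (IH v' (proj1 Hp) v h Hx).
- by apply/(socle_seq_limit wf _ Hl); exists v.
Qed.

Lemma socle_ideal w : right_ideal (S w).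
Proof.
elim: (wf w) => {}w _ IH.
case: (ord_cases lt w) => [Hm|[[v Hp]|Hl]].
- apply: (right_ideal_ext (fun x => socle_seq_min wf x Hm)).
  by split=> //; split=> [x y -> ->|x r ->]; rewrite ?addr0 ?mul0r.
- apply: (right_ideal_ext (fun x => socle_seq_succ wf lt_order x Hp)).
  exact: (soc_step_ideal (IH v (proj1 Hp))).
- apply: (right_ideal_ext (fun x => socle_seq_limit wf x Hl)).
  have [v Hv] := not_min_lt (proj1 Hl).
  split; first by exists v; split => //; exact: (rideal0 (IH v Hv)).
  split=> [x y [v1 [H1 Hx]] [v2 [H2 Hy]]|x r [v1 [H1 Hx]]].
  + case: (ord_lt_total lt_order v1 v2) => [h|[Ev|h]].
    * by exists v2; split => //; exact (ridealD (IH v2 H2) (socle_mono h Hx) Hy).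
    * by subst v2; exists v1; split => //; exact (ridealD (IH v1 H1) Hx Hy).
    * by exists v1; split => //; exact (ridealD (IH v1 H1) Hx (socle_mono h Hy)).
  + by exists v1; split => //; exact (ridealMr (IH v1 H1) r Hx).
Qed.

Lemma socle_next_ideal w : right_ideal (T w).
Proof. exact: (soc_step_ideal (socle_ideal w)). Qed.

Lemma socle_next_sub v u x : lt v u -> T v x -> S u x.
Proof.
elim: (wf u) v => {}u _ IH v Hv Hx.
case: (ord_cases lt u) => [Hm|[[v' Hp]|Hl]].
- by case: (Hm v).
- apply/(socle_seq_succ wf lt_order _ Hp).
  case: (lt_imm_pred lt_order Hp Hv) => [<- //|h].
  exact/ss_base/(IH v' (proj1 Hp) v h Hx).
- have [v' [h1 h2]] := limit_dense Hl Hv.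
  by apply/(socle_seq_limit wf _ Hl); exists v'; split => //; apply: (IH v' h2 v h1 Hx).
Qed.

Lemma socle_mem_below u y : S u y -> (is_min lt u /\ y = 0) \/ exists v, lt v u /\ T v y.
Proof.
case: (ord_cases lt u) => [Hm|[[v Hp]|Hl]].
- by move/(socle_seq_min wf _ Hm) => ->; left.
- by move/(socle_seq_succ wf lt_order _ Hp) => H; right; exists v; case: Hp.
- by move/(socle_seq_limit wf _ Hl) => [v [h H]]; right; exists v; split => //; apply: ss_base.
Qed.

Section Line.
Variables (v : W) (f : R).
Hypothesis f_line : forall x, exists c, S v (x * f - c *: f).

Definition line_over y := exists c, S v (y - c *: f).

Lemma line_over_ideal : right_ideal line_over.
Proof.
have HS := socle_ideal v.
split; first by exists 0; rewrite scale0r subr0; apply: rideal0.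
split=> [x y [c1 H1] [c2 H2]|y r [c Hc]].
- exists (c1 + c2); have -> : x + y - (c1 + c2) *: f = (x - c1 *: f) + (y - c2 *: f).
    by rewrite !scaler_in_alg; ring.
  exact: (ridealD HS H1 H2).
- have [d Hd] := f_line r; exists (c * d).
  have -> : y * r - (c * d) *: f = (y - c *: f) * r + c *: (r * f - d *: f).
    by rewrite !scaler_in_alg; ring.
  exact: (ridealD HS (ridealMr HS r Hc) (ridealZ HS c Hd)).
Qed.

Lemma line_over_minimal : ~ S v f -> minimal_over (S v) line_over.
Proof.
move=> Hf; have HS := socle_ideal v.
split; first exact: line_over_ideal.
split; first by move=> x Hx; exists 0; rewrite scale0r subr0.
split; first by exists f; split => //; exists 1; rewrite scale1r subrr; apply: rideal0.
move=> J HJ HSJ HJline.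
have [[y [Hy Hny]]|Hn] := classic (exists y, J y /\ ~ S v y); last first.
  by left => x Hx; apply: NNPP => Hx'; apply: Hn; exists x.
right; have [c Hc] := HJline y Hy.
have Hc0 : c != 0 by apply/eqP => Ec; apply: Hny; move: Hc; rewrite Ec scale0r subr0.
have Jf : J f.
  apply: (ridealZ_nz HJ Hc0).
  by rewrite -[c *: f](subKr y); apply: (ridealB HJ Hy (HSJ _ Hc)).
move=> x [d Hd]; rewrite -(subrK (d *: f) x).
exact: (ridealD HJ (HSJ _ Hd) (ridealZ HJ d Jf)).
Qed.

Lemma socle_next_of_line : ~ S v f -> T v f.
Proof.
move=> Hf; rewrite -[f]add0r; apply: (ss_add _ (line_over_minimal Hf)).
  exact: (ss_base (rideal0 (socle_ideal v))).
by exists 1; rewrite scale1r subrr; apply: (rideal0 (socle_ideal v)).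
Qed.

End Line.

Record atomic w (e : R) : Prop := Atomic {
  atomic_idem : e * e = e;
  atomic_next : T w e;
  atomic_notin : ~ S w e;
  atomic_line : forall x, exists c, S w (x * e - c *: e) }.

Lemma atomic_neq0 w e : atomic w e -> e <> 0.
Proof. by case=> _ _ HnS _ He; apply: HnS; rewrite He; apply: (rideal0 (socle_ideal w)). Qed.

Lemma atomic_mul_compl w e q : atomic w e -> q * q = q -> S w q -> atomic w (e * (1 - q)).
Proof.
case=> He HT HnS Hline Hq HSq; have HS := socle_ideal w.
split.
- by apply: (idem_mul He (idem_compl Hq)).
- exact: (ridealMr (socle_next_ideal w) _ HT).
- move=> H; apply: HnS; have -> : e = e * (1 - q) + q * e by ring.
  exact: (ridealD HS H (ridealMr HS e HSq)).
- move=> x; have [c Hc] := Hline x; exists c.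
  have -> : x * (e * (1 - q)) - c *: (e * (1 - q)) = (x * e - c *: e) * (1 - q).
    by rewrite !scaler_in_alg; ring.
  exact: (ridealMr HS _ Hc).
Qed.

Lemma atomic_add_socle v h g : atomic v h -> S v g -> g * g = g -> h * g = 0 ->
  atomic v (h + g).
Proof.
case=> Hh HT HnS Hline HSg Hg Hhg; have HS := socle_ideal v.
split.
- have -> : (h + g) * (h + g) = h * h + g * g + (h * g) *+ 2 by ring.
  by rewrite Hh Hg Hhg mul0rn addr0.
- exact: (ridealD (socle_next_ideal v) HT (socle_sub_next HSg)).
- by move=> H; apply: HnS; rewrite -(addrK g h); apply: (ridealB HS H HSg).
- move=> x; have [c Hc] := Hline x; exists c.
  have -> : x * (h + g) - c *: (h + g) = (x * h - c *: h) + (g * x - c *: g).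
    by rewrite !scaler_in_alg; ring.
  exact: (ridealD HS Hc (ridealB HS (ridealMr HS x HSg) (ridealZ HS c HSg))).
Qed.

Lemma atomic_mul_idem v a r : atomic v a -> (a * r) * (a * r) = a * r ->
  S v (a * r) \/ atomic v (a * r).
Proof.
case=> Ha HT HnS Hline Har; have HS := socle_ideal v.
have [c Hc] := Hline r; rewrite mulrC in Hc.
have [Ec|Hc0] := eqVneq c 0; first by left; move: Hc; rewrite Ec scale0r subr0.
(* [a r] is idempotent and congruent to [c a] modulo [S_v], so [c^2 = c]. *)
have Hcc : S v ((c * c - c) *: a).
  have -> : (c * c - c) *: a = (a * r - c *: a) - (a * r - c *: a) * (a * r + c *: a)
      + (a * r * (a * r) - a * r) - (c * c) *: (a * a - a).
    by rewrite !scaler_in_alg; ring.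
  rewrite Har Ha !subrr scaler0 addr0 subr0.
  exact: (ridealB HS Hc (ridealMr HS _ Hc)).
have Ec : c = 1.
  have [Ecc|Hcc0] := eqVneq (c * c - c) 0.
    by apply: (mulfI Hc0); rewrite mulr1; apply/eqP; rewrite -subr_eq0 Ecc.
  by case: HnS; apply: (ridealZ_nz HS Hcc0 Hcc).
rewrite Ec scale1r in Hc; right; split => //.
- exact: (ridealMr (socle_next_ideal v) _ HT).
- by move=> H; apply: HnS; rewrite -[a](subKr (a * r)); apply: (ridealB HS H Hc).
- move=> x; have [d Hd] := Hline x; exists d.
  have -> : x * (a * r) - d *: (a * r) = (x * a - d *: a) + (a * r - a) * x - d *: (a * r - a).
    by rewrite !scaler_in_alg; ring.
  exact: (ridealB HS (ridealD HS Hd (ridealMr HS x Hc)) (ridealZ HS d Hc)).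
Qed.

End Socle.

(** * Layers *)

Section Layers.
Variables (K : fieldType) (R : comAlgType K).
Variables (W : Type) (lt : W -> W -> Prop) (wf : well_founded lt).
Hypothesis lt_order : strict_total_order lt.
Hypothesis R_regular : von_neumann_regular R.
Local Notation S := (socle_seq (R := R) wf).
Local Notation T := (@socle_next K R W lt wf).
Local Notation atomic := (@atomic K R W lt wf).

Section LayerIso.
Variables (w : W) (L : Type) (phi : R -> L -> K).
Hypothesis phi_iso : layer_iso wf w phi.

Lemma layerD x y l : T w x -> T w y -> phi (x + y) l = phi x l + phi y l.
Proof. by case: phi_iso => H _ Hx Hy; apply: H. Qed.

Lemma layerZ c x l : T w x -> phi (c *: x) l = c * phi x l.
Proof. by case: phi_iso => _ [H _] Hx; apply: H. Qed.

Lemma layerM x y l : T w x -> T w y -> phi (x * y) l = phi x l * phi y l.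
Proof. by case: phi_iso => _ [_ [H _]] Hx Hy; apply: H. Qed.

Lemma layer_finsupp x : T w x -> finsupp (phi x).
Proof. by case: phi_iso => _ [_ [_ [H _]]]; apply: H. Qed.

Lemma layer_onto g : finsupp g -> exists x, T w x /\ forall l, phi x l = g l.
Proof. by case: phi_iso => _ [_ [_ [_ [H _]]]]; apply: H. Qed.

Lemma layer_ker x : T w x -> (forall l, phi x l = 0) <-> S w x.
Proof. by case: phi_iso => _ [_ [_ [_ [_ H]]]]; apply: H. Qed.

Lemma layerB x y l : T w x -> T w y -> phi (x - y) l = phi x l - phi y l.
Proof.
move=> Hx Hy; rewrite -scaleN1r layerD ?layerZ ?mulN1r //.
exact: (ridealZ (socle_next_ideal R wf lt_order w) _ Hy).
Qed.

Lemma atomic_of_layer_unit a l : a * a = a -> T w a -> phi a l = 1 ->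
  (forall m, m <> l -> phi a m = 0) -> atomic w a.
Proof.
move=> Ha HTa H1 H0; have HT := socle_next_ideal R wf lt_order w.
split=> // [/(layer_ker HTa)/(_ l)/eqP|x]; first by rewrite H1 oner_eq0.
have HTxa : T w (x * a) by exact: (ridealMl HT x HTa).
have HTca c : T w (c *: a) by exact: (ridealZ HT c HTa).
exists (phi (x * a) l); apply/(layer_ker (ridealB HT HTxa (HTca _))) => m.
rewrite layerB // layerZ //.
have [->|Hml] := classic (m = l); first by rewrite H1 mulr1 subrr.
have -> : phi (x * a) m = phi (x * a) m * phi a m by rewrite -layerM // -mulrA Ha.
by rewrite H0 // !mulr0 subrr.
Qed.

Lemma idempotent_of_layer_support y l : T w y -> phi y l != 0 ->
  (forall m, m <> l -> phi y m = 0) ->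
  exists r, let a := y * r in
    [/\ a * a = a, T w a, phi a l = 1 & forall m, m <> l -> phi a m = 0].
Proof.
move=> Hy Hl H0; have HT := socle_next_ideal R wf lt_order w.
have [q Hq] := R_regular y; exists q => a.
have Ha : a * a = a by rewrite /a {3}Hq; ring.
have HTa : T w a by exact: (ridealMr HT q Hy).
have Ey : y = a * y by rewrite /a {1}Hq; ring.
split=> //.
- by apply: (mulIf Hl); rewrite mul1r -layerM // -Ey.
- move=> m Hm; have -> : a = y * (q * y * q) by rewrite /a {1}Hq; ring.
  by rewrite layerM ?H0 ?mul0r //; apply: (ridealMr HT q (ridealMl HT q Hy)).
Qed.

Definition unit_vector (l : L) : L -> K :=
  fun m => if excluded_middle_informative (m = l) then 1 else 0.

Lemma unit_vector_finsupp l : finsupp (unit_vector l).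
Proof.
exists [:: l] => m; rewrite /unit_vector.
by case: (excluded_middle_informative (m = l)) => [Eml _|//]; left.
Qed.

Lemma atomic_layer_unit l : exists a, atomic w a /\ phi a l = 1 /\ forall m, m <> l -> phi a m = 0.
Proof.
have [z [Hz Hzl]] := layer_onto (unit_vector_finsupp l).
have Hz1 : phi z l = 1 by rewrite Hzl /unit_vector; case: excluded_middle_informative.
have Hz0 m : m <> l -> phi z m = 0 by rewrite Hzl /unit_vector; case: excluded_middle_informative.
have Hz1' : phi z l != 0 by rewrite Hz1 oner_eq0.
have [r [Ha HTa H1 H0]] := idempotent_of_layer_support Hz Hz1' Hz0.
by exists (z * r); split => //; exact: (atomic_of_layer_unit Ha HTa H1 H0).
Qed.

Lemma atomic_multiple_of_layer y : T w y -> ~ S w y -> exists r, atomic w (y * r).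
Proof.
move=> Hy Hny; have HT := socle_next_ideal R wf lt_order w.
have [l Hl] : exists l, phi y l != 0.
  apply: NNPP => H; apply/Hny/(layer_ker Hy) => l.
  by apply/eqP; apply: NNPP => Hl; apply: H; exists l; apply/negP.
have [a [[Ha HTa _ _] [H1 H0]]] := atomic_layer_unit l.
have HTya : T w (y * a) by exact: (ridealMr HT a Hy).
have Hyal : phi (y * a) l != 0 by rewrite layerM // H1 mulr1.
have Hya0 m : m <> l -> phi (y * a) m = 0 by move=> Hm; rewrite layerM // H0 // mulr0.
have [r [Hb HTb Hb1 Hb0]] := idempotent_of_layer_support HTya Hyal Hya0.
by exists (a * r); rewrite mulrA; exact: (atomic_of_layer_unit Hb HTb Hb1 Hb0).
Qed.

End LayerIso.

Hypothesis layers : forall w, exists (L : Type) (phi : R -> L -> K),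
  inhabited L /\ (exists e : L -> nat, injective e) /\ layer_iso wf w phi.

Lemma atomic_multiple v y : T v y -> ~ S v y -> exists r, atomic v (y * r).
Proof. by have [L [phi [_ [_ Hphi]]]] := layers v; exact: (atomic_multiple_of_layer Hphi). Qed.

Lemma socle_level v y : T v y -> y <> 0 ->
  exists u, (u = v \/ lt u v) /\ T u y /\ ~ S u y.
Proof.
elim: (wf v) => {}v _ IH Hy Hy0.
have [HS|HnS] := classic (S v y); last by exists v; split => //; left.
case: (socle_mem_below lt_order HS) => [[_ H]//|[u [Hu HTu]]].
have [u' [Hu' H]] := IH u Hu HTu Hy0.
exists u'; split => //; right; case: Hu' => [->//|h]; exact: (ord_lt_trans lt_order h Hu).
Qed.

Lemma atomic_mul_notin w f u : atomic w f -> lt u w -> exists t, S w t /\ ~ S u (f * t).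
Proof.
(* Otherwise [f] would lie in [S_(u+1)], which is contained in [S_w]. *)
case=> Hf _ HnS Hline Hu; apply: NNPP => Hn; apply: (HnS).
apply: (socle_next_sub lt_order Hu); apply: (socle_next_of_line lt_order).
- move=> x; have [c Hc] := Hline x; exists c.
  have -> : x * f - c *: f = f * (x * f - c *: f).
    by rewrite mulrBr mulrCA -scalerAr Hf.
  by apply: NNPP => H; apply: Hn; exists (x * f - c *: f).
- by move=> H; apply: HnS; apply: (socle_mono lt_order Hu H).
Qed.

Lemma atomic_below w f u : atomic w f -> lt u w -> exists h, atomic u h /\ h * f = h.
Proof.
elim: (wf w) f => {}w _ IH f Hf Hu.
have [t [Ht Hnt]] := atomic_mul_notin Hf Hu.
have HSft : S w (f * t) by exact: (ridealMl (socle_ideal R wf lt_order w) f Ht).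
have Hft0 : f * t <> 0 by move=> H; apply: Hnt; rewrite H; exact: (rideal0 (socle_ideal R wf lt_order u)).
case: (socle_mem_below lt_order HSft) => [[Hm _]|[v1 [Hv1 HTv1]]]; first by case: (Hm u).
have [v [Hv [HTv HnSv]]] := socle_level HTv1 Hft0.
have Hvw : lt v w by case: Hv => [->//|h]; exact: (ord_lt_trans lt_order h Hv1).
have [r Ha] := atomic_multiple HTv HnSv.
have Haf : f * t * r * f = f * t * r.
  have -> : f * t * r * f = (f * f) * (t * r) by ring.
  by rewrite (atomic_idem Hf) mulrA.
case: (ord_lt_total lt_order u v) => [Huv|[Euv|Hvu]].
- have [h [Hh Hhf]] := IH v Hvw _ Ha Huv.
  by exists h; split => //; rewrite -Hhf -mulrA Haf.
- by exists (f * t * r); rewrite Euv.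
- by case: Hnt; apply: (socle_next_sub lt_order Hvu HTv).
Qed.

Lemma layer_generators u : exists a : nat -> R, (forall j, a j = 0 \/ atomic u (a j)) /\
  (forall x, T u x -> exists js : seq nat, S u (x - x * join (List.map a js))).
Proof.
have [L [phi [_ [[code Hcode] Hphi]]]] := layers u.
have HT := socle_next_ideal R wf lt_order u.
have [A HA] := choice _ (atomic_layer_unit Hphi).
have [a [Ha HaA]] := reindex_nat 0 A Hcode.
exists a; split=> [j|x Hx].
  by case: (Ha j) => [->|[l ->]]; [left | right; case: (HA l)].
have [s Hs] := layer_finsupp Hphi Hx.
exists (List.map code s); rewrite List.map_map (List.map_ext _ _ HaA).
set J := join _.
have HTA l : T u (A l) by case: (HA l) => -[].
have HTJ : T u J.
  apply: (join_ideal (rideal0 HT) (ridealD HT) (ridealMr HT)) => b.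
  by case/List.in_map_iff => l [<- _].
have HTxJ : T u (x * J) by exact: (ridealMr HT J Hx).
apply/(layer_ker Hphi (ridealB HT Hx HTxJ)) => m.
rewrite (layerB Hphi _ Hx HTxJ) (layerM Hphi _ Hx HTJ).
have [->|Hm] := eqVneq (phi x m) 0; first by rewrite mul0r subrr.
have [[Hidem _ _ _] [H1 _]] := HA m.
have HAJ : A m * J = A m by apply: mul_join_mem => //; apply: List.in_map; apply: Hs; apply/eqP.
have HJm : phi J m = 1.
  by have := f_equal (phi^~ m) HAJ; rewrite /= (layerM Hphi _ (HTA m) HTJ) H1 mul1r.
by rewrite HJm mulr1 subrr.
Qed.

Hypothesis W_countable : exists code : W -> nat, injective code.

Lemma generators : exists g : nat -> R, (forall k, g k = 0 \/ exists u, atomic u (g k)) /\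
  (forall u x, T u x -> exists ks : seq nat,
     (forall k, List.In k ks -> T u (g k)) /\ x = x * join (List.map g ks)).
Proof.
have [A HA] := choice _ layer_generators.
have [cW HcW] := W_countable.
(* Cantor pairing merges the generators of the countably many layers into one sequence. *)
pose code (p : W * nat) := Cantor.to_nat (cW p.1, p.2).
have Hcode : injective code.
  move=> [u j] [u' j'] /(f_equal Cantor.of_nat); rewrite !Cantor.cancel_of_to.
  by case=> /HcW -> ->.
have [g [Hg HgA]] := reindex_nat 0 (fun p => A p.1 p.2) Hcode.
exists g; split=> [k|u].
  case: (Hg k) => [->|[[u j] ->]]; first by left.
  by case: (proj1 (HA u) j) => [->|H]; [left | right; exists u].
elim: (wf u) => {}u _ IH x Hx.
have HT := socle_next_ideal R wf lt_order u.
have [js Hjs] := proj2 (HA u) x Hx.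
pose ks1 := List.map (fun j => code (u, j)) js.
have Eks1 : List.map g ks1 = List.map (A u) js.
  by rewrite List.map_map; apply: List.map_ext => j; apply: (HgA (u, j)).
have Hks1 k : List.In k ks1 -> T u (g k).
  case/List.in_map_iff => j [<- _]; rewrite (HgA (u, j)) /=.
  by case: (proj1 (HA u) j) => [->|[_ HTa _ _]] //; exact: (rideal0 HT).
case: (socle_mem_below lt_order Hjs) => [[_ Ey]|[v [Hv HTv]]].
  by exists ks1; split=> //; rewrite Eks1; apply/eqP; rewrite -subr_eq0 Ey.
have [ks2 [Hks2 Hy]] := IH v Hv _ HTv.
exists (ks1 ++ ks2); split=> [k /(List.in_app_or ks1 ks2 k) [/Hks1 //|/Hks2 Hk]|].
  exact: (socle_sub_next (socle_next_sub lt_order Hv Hk)).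
rewrite List.map_app join_cat Eks1.
set J1 := join (List.map (A u) js) in Hy *; set J2 := join (List.map g ks2) in Hy *.
by rewrite -[x in LHS](subrK (x * J1)) {1}Hy; ring.
Qed.

Lemma socle_generators g w :
  (forall u x, T u x -> exists ks : seq nat,
     (forall k, List.In k ks -> T u (g k)) /\ x = x * join (List.map g ks)) ->
  ~ is_min lt w -> forall x, S w x -> exists ks : seq nat,
     (forall k, List.In k ks -> S w (g k)) /\ x = x * join (List.map g ks).
Proof.
move=> Hg Hnm x Hx.
case: (socle_mem_below lt_order Hx) => [[Hm _]//|[u [Hu HTu]]].
have [ks [Hks Hxk]] := Hg u x HTu.
by exists ks; split=> // k Hk; apply: (socle_next_sub lt_order Hu (Hks k Hk)).
Qed.

End Layers.

(** * Decomposing an atomic idempotent *)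

Section AtomicDecomposition.
Variables (K : fieldType) (R : comAlgType K).
Variables (W : Type) (lt : W -> W -> Prop) (wf : well_founded lt).
Local Notation S := (socle_seq (R := R) wf).
Local Notation atomic := (@atomic K R W lt wf).
Variables (w : W) (e : R) (I : Type) (valid : I -> Prop) (lev : I -> W).

Record atomic_decomposition (E : I -> R) : Prop := AtomicDecomposition {
  dec_atomic : forall i, valid i -> atomic (lev i) (E i);
  dec_below : forall i, valid i -> E i * e = E i;
  dec_orth : forall i j, valid i -> valid j -> i <> j -> E i * E j = 0;
  dec_dense : forall x, S w x -> exists s : seq I, (forall i, List.In i s -> valid i) /\
    List.NoDup s /\ x * e = x * e * \sum_(i <- s) E i }.

End AtomicDecomposition.

Section Construction.
Variables (K : fieldType) (R : comAlgType K).
Variables (W : Type) (lt : W -> W -> Prop) (wf : well_founded lt).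
Hypothesis lt_order : strict_total_order lt.
Hypothesis R_regular : von_neumann_regular R.
Local Notation S := (socle_seq (R := R) wf).
Local Notation atomic := (@atomic K R W lt wf).
Hypothesis layers : forall w, exists (L : Type) (phi : R -> L -> K),
  inhabited L /\ (exists e : L -> nat, injective e) /\ layer_iso wf w phi.

Variables (w : W) (e : R).
Hypothesis e_atomic : atomic w e.
Variables (I : Type) (i0 : I) (valid : I -> Prop) (lev : I -> W) (code : I -> nat).
Hypothesis lev_lt : forall i, valid i -> lt (lev i) w.
Hypothesis code_inj : injective code.
Variable g : nat -> R.
Hypothesis g_idem : forall k, g k * g k = g k.
Hypothesis g_dense : forall x, S w x -> exists ks : seq nat,
  (forall k, List.In k ks -> S w (g k)) /\ x = x * join (List.map g ks).
Hypothesis fresh_level : forall k r (F : seq I), S w (g k) -> (g k * r) * (g k * r) = g k * r ->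
  exists i, valid i /\ ~ List.In i F /\ (S (lev i) (g k * r) \/ atomic (lev i) (g k * r)).

Record state := State { used : seq I; part : I -> R }.

Definition covered (x : state) : R := \sum_(i <- used x) part x i.

Record good (x : state) : Prop := Good {
  good_uniq : List.NoDup (used x);
  good_valid : forall i, List.In i (used x) -> valid i;
  good_atomic : forall i, List.In i (used x) -> atomic (lev i) (part x i);
  good_below : forall i, List.In i (used x) -> part x i * e = part x i;
  good_orth : forall i j, List.In i (used x) -> List.In j (used x) -> i <> j ->
    part x i * part x j = 0 }.

Definition extends (x y : state) : Prop :=
  forall i, List.In i (used x) -> List.In i (used y) /\ part y i = part x i.

Lemma extends_refl x : extends x x.
Proof. by []. Qed.

Lemma extends_trans x y z : extends x y -> extends y z -> extends x z.
Proof.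
move=> Hxy Hyz i /Hxy [/Hyz [Hz Ez] Ey]; split=> //; by rewrite Ez.
Qed.

Lemma e_idem : e * e = e.
Proof. exact: atomic_idem e_atomic. Qed.

Lemma good_covered x : good x -> [/\ covered x * covered x = covered x, S w (covered x),
  covered x * e = covered x & forall i, List.In i (used x) -> part x i * covered x = part x i].
Proof.
case=> Huniq Hvalid Hat Hbelow Horth.
have Hpart i : List.In i (used x) -> part x i * covered x = part x i.
  move=> Hi; apply: mulr_sum_delta => // [j Hj Hji|]; first by apply: Horth.
  exact: atomic_idem (Hat i Hi).
split=> //.
- exact: sum_mulr_fix.
- apply: (rideal_sum (socle_ideal R wf lt_order w)) => i Hi.
  exact: (socle_next_sub lt_order (lev_lt (Hvalid i Hi)) (atomic_next (Hat i Hi))).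
- exact: sum_mulr_fix.
Qed.

Lemma covered_extends x y : good x -> good y -> extends x y -> covered x * covered y = covered x.
Proof.
move=> Hx Hy Hxy; have [_ _ _ Hpart] := good_covered Hy.
rewrite /covered (eq_sum_In (B := part y)) => [|i /Hxy [] //].
by apply: sum_mulr_fix => i /Hxy [/Hpart].
Qed.

Definition upd (A : I -> R) i p : I -> R :=
  fun j => if excluded_middle_informative (j = i) then p else A j.

Lemma upd_eq A i p : upd A i p i = p.
Proof. by rewrite /upd; case: excluded_middle_informative. Qed.

Lemma upd_neq A i p j : j <> i -> upd A i p j = A j.
Proof. by rewrite /upd; case: excluded_middle_informative. Qed.

(* The piece at index [i] covers [gg], the part of a generator below [e] not yet covered.  If
   [gg] is not atomic at level [lev i] it lies in [S_(lev i)], and an atomic [h] at that level,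
   orthogonal to [gg] and to the pieces chosen so far, is added to it. *)
Definition piece (x : state) i gg : R :=
  if excluded_middle_informative (atomic (lev i) gg) then gg
  else gg + epsilon (inhabits 0)
         (fun h => atomic (lev i) h /\ h * (e * (1 - covered x) * (1 - gg)) = h).

Lemma piece_spec x i gg : good x -> valid i -> gg * gg = gg ->
  gg * (e * (1 - covered x)) = gg -> S (lev i) gg \/ atomic (lev i) gg ->
  [/\ atomic (lev i) (piece x i gg), piece x i gg * e = piece x i gg,
      piece x i gg * covered x = 0 & gg * piece x i gg = gg].
Proof.
move=> Hx Hv Hgg Hgle Hlev; have [HPP HSP HPe _] := good_covered Hx.
set P := covered x in HPP HSP HPe Hgle *.
have Hgge : gg * e = gg by apply: mul_idem_fix e_idem Hgle.
have HggP : gg * P = 0 by apply: mul_compl_eq0 HPP Hgle.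
rewrite /piece; case: excluded_middle_informative => Hat; first by split.
have HSgg : S (lev i) gg by case: Hlev.
have Hf : atomic w (e * (1 - P) * (1 - gg)).
  apply: (atomic_mul_compl lt_order _ Hgg (socle_mono lt_order (lev_lt Hv) HSgg)).
  exact: (atomic_mul_compl lt_order e_atomic HPP HSP).
have := epsilon_spec (inhabits 0)
  (fun h => atomic (lev i) h /\ h * (e * (1 - P) * (1 - gg)) = h)
  (atomic_below lt_order R_regular layers Hf (lev_lt Hv)).
set h := epsilon _ _; case=> Hh Hhf.
have Hhgg : h * gg = 0 by apply: (mul_compl_eq0 Hgg Hhf).
split.
- by rewrite addrC; apply: (atomic_add_socle lt_order Hh HSgg Hgg Hhgg).
- rewrite mulrDl Hgge; congr (_ + _).
  by apply: (mul_idem_fix (b := (1 - P) * (1 - gg)) e_idem); rewrite [e * _]mulrA.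
- rewrite mulrDl HggP add0r; apply: (mul_compl_eq0 (a := e * (1 - gg)) HPP).
  by rewrite -[RHS]Hhf; congr (_ * _); ring.
- by rewrite mulrDr Hgg mulrC Hhgg addr0.
Qed.

Definition assign (x : state) i gg : state :=
  State (i :: used x) (upd (part x) i (piece x i gg)).

Lemma assign_spec x i gg : good x -> valid i -> ~ List.In i (used x) -> gg * gg = gg ->
  gg * (e * (1 - covered x)) = gg -> S (lev i) gg \/ atomic (lev i) gg ->
  [/\ good (assign x i gg), gg * covered (assign x i gg) = gg & extends x (assign x i gg)].
Proof.
move=> Hx Hv Hi Hgg Hgle Hlev.
have [Hp Hpe HpP Hgp] := piece_spec Hx Hv Hgg Hgle Hlev.
have [HPP _ _ Hpart] := good_covered Hx.
set p := piece x i gg in Hp Hpe HpP Hgp *.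
have Hupd j : List.In j (used x) -> upd (part x) i p j = part x j.
  by move=> Hj; apply: upd_neq => Eji; apply: Hi; rewrite -Eji.
have Hjp j : List.In j (used x) -> part x j * p = 0.
  by move=> Hj; rewrite -(Hpart j Hj) -mulrA [covered x * p]mulrC HpP mulr0.
have HggP : gg * covered x = 0 by apply: (mul_compl_eq0 HPP Hgle).
have Hcov : covered (assign x i gg) = p + covered x.
  by rewrite /covered /= big_cons upd_eq; congr (_ + _); apply: eq_sum_In.
case: Hx => Huniq Hvalid Hat Hbelow Horth.
split; last by move=> j Hj; split; [right | rewrite /= Hupd].
- split=> /=.
  + exact: List.NoDup_cons.
  + by move=> j [<-|/Hvalid].
  + by move=> j [<-|Hj]; rewrite ?upd_eq ?Hupd //; apply: Hat.
  + by move=> j [<-|Hj]; rewrite ?upd_eq ?Hupd //; apply: Hbelow.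
  + move=> j k [<-|Hj] [<-|Hk] Hjk //; rewrite ?upd_eq ?Hupd //.
    * by rewrite mulrC Hjp.
    * by rewrite Hjp.
    * exact: Horth.
- by rewrite Hcov mulrDr Hgp HggP addr0.
Qed.

Definition absorb k (x : state) : state :=
  let gg := g k * (e * (1 - covered x)) in
  if excluded_middle_informative (S w (g k)) then
    assign x (epsilon (inhabits i0) (fun i => valid i /\ ~ List.In i (used x) /\
                                        (S (lev i) gg \/ atomic (lev i) gg))) gg
  else x.

Lemma absorb_spec k x : good x -> [/\ good (absorb k x), extends x (absorb k x) &
  S w (g k) -> g k * e * covered (absorb k x) = g k * e].
Proof.
move=> Hx; have [HPP _ _ _] := good_covered Hx.
rewrite /absorb; case: excluded_middle_informative => HSk; last by split.
set P := covered x in HPP *; set gg := g k * (e * (1 - P)).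
have Hgg : gg * gg = gg.
  by apply: idem_mul (g_idem k) (idem_mul e_idem (idem_compl HPP)).
have Hgle : gg * (e * (1 - P)) = gg by rewrite -mulrA idem_mul ?e_idem ?idem_compl.
have := epsilon_spec (inhabits i0) (fun i => valid i /\ ~ List.In i (used x) /\
  (S (lev i) gg \/ atomic (lev i) gg)) (fresh_level (used x) HSk Hgg).
set i := epsilon _ _; case=> Hv [Hi Hlev].
have [Hy Hgp Hxy] := assign_spec Hx Hv Hi Hgg Hgle Hlev.
split=> // _; have HPy := covered_extends Hx Hy Hxy.
have -> : g k * e = gg + g k * e * P by rewrite /gg; ring.
by rewrite mulrDl Hgp -mulrA HPy.
Qed.

Definition fill k (x : state) : state :=
  let i := epsilon (inhabits i0) (fun i => code i = k /\ valid i) in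
  if excluded_middle_informative (code i = k /\ valid i /\ ~ List.In i (used x))
  then assign x i 0 else x.

Lemma fill_spec k x : good x -> [/\ good (fill k x), extends x (fill k x) &
  forall i, code i = k -> valid i -> List.In i (used (fill k x))].
Proof.
move=> Hx; rewrite /fill; set i := epsilon _ _.
case: excluded_middle_informative => [[Hk [Hv Hi]]|Hn] /=.
  have HS0 : S (lev i) 0 by exact: (rideal0 (socle_ideal R wf lt_order (lev i))).
  have [Hy _ Hxy] := assign_spec Hx Hv Hi (mulr0 0) (mul0r _) (or_introl HS0).
  by split=> // j Hj Hvj; rewrite -(code_inj (etrans Hj (esym Hk))); left.
split=> // j Hj Hvj.
have [Hik Hiv] : code i = k /\ valid i.
  exact: (epsilon_spec (inhabits i0) (fun i => code i = k /\ valid i) (ex_intro _ j (conj Hj Hvj))).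
have Eij : i = j by apply: code_inj; rewrite Hj.
by apply: NNPP => Hn'; apply: Hn; rewrite Eij; split => //; split.
Qed.

(* Stage [k] absorbs the generator [g k], then uses the index coded by [k]: in the end every
   valid index carries a piece, i.e. every factor of [B_(w,1)] is accounted for. *)
Fixpoint stage k : state :=
  if k is k'.+1 then fill k' (absorb k' (stage k')) else State [::] (fun=> 0).

Lemma stage_good_extends k : good (stage k) /\ extends (stage k) (stage k.+1).
Proof.
elim: k => [|k [Hk _]]; last first.
  have [Hab _ _] := absorb_spec k Hk; have [Hfill _ _] := fill_spec k Hab.
  have [Hab' Hext _] := absorb_spec k.+1 Hfill; have [_ Hext' _] := fill_spec k.+1 Hab'.
  by split=> //; apply: extends_trans Hext Hext'.
have Hg0 : good (stage 0) by split=> //; exact: List.NoDup_nil.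
have [Hab Hext _] := absorb_spec 0 Hg0; have [_ Hext' _] := fill_spec 0 Hab.
by split=> //; apply: extends_trans Hext Hext'.
Qed.

Lemma stage_good k : good (stage k).
Proof. exact: (proj1 (stage_good_extends k)). Qed.

Lemma stage_extends k k' : (k <= k')%N -> extends (stage k) (stage k').
Proof.
elim: k' => [|k' IH]; first by rewrite leqn0 => /eqP ->; apply: extends_refl.
rewrite leq_eqVlt ltnS => /orP [/eqP ->|/IH Hk]; first exact: extends_refl.
exact: (extends_trans Hk (proj2 (stage_good_extends k'))).
Qed.

Lemma stage_absorbs k : S w (g k) -> g k * e * covered (stage k.+1) = g k * e.
Proof.
move=> HSk; have [Hab Hext Habs] := absorb_spec k (stage_good k).
have [Hfill Hext' _] := fill_spec k Hab.
by rewrite -(Habs HSk) -mulrA (covered_extends Hab Hfill Hext') Habs.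
Qed.

Lemma stage_fills i : valid i -> List.In i (used (stage (code i).+1)).
Proof.
move=> Hv; have [Hab _ _] := absorb_spec (code i) (stage_good (code i)).
by have [_ _ Hfill] := fill_spec (code i) Hab; apply: Hfill.
Qed.

Lemma stage_covers x : S w x -> exists M, x * e = x * e * covered (stage M).
Proof.
move=> Hx; have [ks [Hks Hxj]] := g_dense Hx.
exists (sumn ks).+1; set P := covered _.
have HPe : P * e = P by case: (good_covered (stage_good (sumn ks).+1)).
have Hgk k : List.In k ks -> g k * (1 - e + P) = g k.
  move=> Hk; have Hle : (k.+1 <= (sumn ks).+1)%N by rewrite ltnS; apply: In_leq_sumn.
  have HCP := covered_extends (stage_good _) (stage_good _) (stage_extends Hle).
  have HgP : g k * P = g k * e.
    have -> : g k * P = g k * e * P by rewrite -{1}HPe; ring.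
    by rewrite -(stage_absorbs (Hks k Hk)) -mulrA HCP.
  by rewrite mulrDr HgP mulrBr mulr1 subrK.
set J := join _ in Hxj.
have HJ : J * (1 - e + P) = J by apply: join_mul_fix => _ /List.in_map_iff [k [<- /Hgk]].
have HJP : J * P = J * e.
  rewrite -{2}HJ; have -> : J * (1 - e + P) * e = J * (e - e * e) + J * (P * e) by ring.
  by rewrite e_idem HPe subrr mulr0 add0r.
by rewrite {1 2}Hxj -!mulrA [e * P]mulrC HPe HJP.
Qed.

Lemma atomic_decomposition_exists : exists E, atomic_decomposition wf w e valid lev E.
Proof.
pose E i := part (stage (code i).+1) i.
have Estage i k : valid i -> List.In i (used (stage k)) -> E i = part (stage k) i.
  move=> Hv Hk; have Hi := stage_fills Hv.
  case: (leqP (code i).+1 k) => Hle.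
  - by rewrite (proj2 (stage_extends Hle Hi)).
  - by rewrite /E (proj2 (stage_extends (ltnW Hle) Hk)).
exists E; split=> [i Hv|i Hv|i j Hi Hj Hij|x Hx].
- exact: (good_atomic (stage_good _) (stage_fills Hv)).
- exact: (good_below (stage_good _) (stage_fills Hv)).
- pose M := maxn (code i).+1 (code j).+1.
  have [HiM _] := stage_extends (leq_maxl (code i).+1 (code j).+1) (stage_fills Hi).
  have [HjM _] := stage_extends (leq_maxr (code i).+1 (code j).+1) (stage_fills Hj).
  rewrite (Estage i M Hi HiM) (Estage j M Hj HjM).
  exact: (good_orth (stage_good M) HiM HjM Hij).
- have [M HM] := stage_covers Hx; have HgM := stage_good M.
  exists (used (stage M)); split; first exact: (good_valid HgM).
  split; first exact: (good_uniq HgM).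
  rewrite {1}HM /covered; congr (_ * _); apply: eq_sum_In => i Hi.
  by rewrite (Estage i M) //; apply: (good_valid HgM).
Qed.

End Construction.

(** * Assembling the isomorphism *)

Section Assembly.
Variables (K : fieldType) (R : comAlgType K).
Variables (W : Type) (lt : W -> W -> Prop) (wf : well_founded lt).
Hypothesis lt_order : strict_total_order lt.
Hypothesis R_regular : von_neumann_regular R.
Hypothesis layers : forall w, exists (L : Type) (phi : R -> L -> K),
  inhabited L /\ (exists e : L -> nat, injective e) /\ layer_iso wf w phi.
Local Notation S := (socle_seq (R := R) wf).
Local Notation atomic := (@atomic K R W lt wf).
Local Notation Bscal := (@Bscal K W lt wf).
Local Notation Bset := (@Bset K W lt wf).
Local Notation El := (El K W).

(* [F] induces a K-algebra isomorphism [eR ≅ B_(v,1)] mapping [e] to [1]. *)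
Record iso_at v (e : R) (F : R -> El) : Prop := IsoAt {
  iso_mem : forall x, Bset v (F x);
  iso_onto : forall y, Bset v y -> exists x, F x = y;
  iso_ker : forall x y, F x = F y -> x * e = y * e;
  iso_cut : forall x, F x = F (x * e);
  iso_add : forall x y, F (x + y) = el_add (F x) (F y);
  iso_mul : forall x y, F (x * y) = el_mul (F x) (F y);
  iso_scale : forall c x, F (c *: x) = el_scale c (F x);
  iso_one : Bscal v 1 (F e) }.

Variables (w : W) (e : R).
Hypothesis e_atomic : atomic w e.
Hypothesis w_not_min : ~ is_min lt w.
Variables (I : Type) (valid : I -> Prop) (lev : I -> W).
Hypothesis lev_lt : forall i, valid i -> lt (lev i) w.
Variable E : I -> R.
Hypothesis E_dec : atomic_decomposition wf w e valid lev E.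
Variable F : I -> R -> El.
Hypothesis F_iso : forall i, valid i -> iso_at (lev i) (E i) (F i).

Lemma E_idem i : valid i -> E i * E i = E i.
Proof. by move=> Hv; apply: (atomic_idem (dec_atomic E_dec Hv)). Qed.

Lemma e_mulE i : valid i -> e * E i = E i.
Proof. by move=> Hv; rewrite mulrC (dec_below E_dec Hv). Qed.

Lemma sum_dec_in (B : I -> R) s j : (forall i, List.In i s -> valid i) -> List.NoDup s ->
  List.In j s -> (\sum_(i <- s) B i * E i) * E j = B j * E j.
Proof.
move=> Hs Hnd Hj; apply: sum_mulr_delta => // [i Hi Hij|]; last exact: E_idem (Hs j Hj).
exact: (dec_orth E_dec (Hs i Hi) (Hs j Hj) Hij).
Qed.

Lemma sum_dec_out (B : I -> R) s j : valid j -> (forall i, List.In i s -> valid i) ->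
  ~ List.In j s -> (\sum_(i <- s) B i * E i) * E j = 0.
Proof.
move=> Hj Hs Hn; apply: sum_mulr_eq0 => i Hi.
rewrite -mulrA (dec_orth E_dec (Hs i Hi) Hj) ?mulr0 // => Eij.
by apply: Hn; rewrite -Eij.
Qed.

Lemma family_cut i x : valid i -> F i x = F i (x * e).
Proof.
by move=> Hv; rewrite (iso_cut (F_iso Hv)) [in RHS](iso_cut (F_iso Hv)) -mulrA e_mulE.
Qed.

Lemma family_one i : valid i -> Bscal (lev i) 1 (F i e).
Proof. by move=> Hv; rewrite (iso_cut (F_iso Hv)) e_mulE //; exact: (iso_one (F_iso Hv)). Qed.

Lemma sum_E_props s : (forall i, List.In i s -> valid i) -> List.NoDup s ->
  [/\ (\sum_(i <- s) E i) * (\sum_(i <- s) E i) = \sum_(i <- s) E i,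
      (\sum_(i <- s) E i) * e = \sum_(i <- s) E i & S w (\sum_(i <- s) E i)].
Proof.
move=> Hs Hnd; split.
- apply: sum_orth_idem => // [i j Hi Hj|i Hi]; first exact: (dec_orth E_dec (Hs i Hi) (Hs j Hj)).
  exact: E_idem (Hs i Hi).
- by apply: sum_mulr_fix => i Hi; apply: (dec_below E_dec (Hs i Hi)).
- apply: (rideal_sum (socle_ideal R wf lt_order w)) => i /Hs Hv.
  exact: (socle_next_sub lt_order (lev_lt Hv) (atomic_next (dec_atomic E_dec Hv))).
Qed.

Lemma mulr_sum_E_eq0 z s : (forall i, List.In i s -> valid i) ->
  (forall i, valid i -> z * E i = 0) -> z * \sum_(i <- s) E i = 0.
Proof. by move=> Hs Hz; rewrite mulrC; apply: sum_mulr_eq0 => i /Hs Hv; rewrite mulrC Hz. Qed.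

Lemma dec_line x : exists c (s : seq I), (forall i, List.In i s -> valid i) /\ List.NoDup s /\
  x * e - c *: e = (x * e - c *: e) * \sum_(i <- s) E i.
Proof.
have [c Hc] := atomic_line e_atomic x.
have [s [Hs [Hnd Hcov]]] := dec_dense E_dec Hc.
exists c, s; split=> //; split=> //.
have He : (x * e - c *: e) * e = x * e - c *: e.
  by rewrite mulrBl -mulrA -scalerAl (atomic_idem e_atomic).
by rewrite He in Hcov.
Qed.

Lemma dec_annihilator z : z * e = z -> (forall i, valid i -> z * E i = 0) -> z = 0.
Proof.
(* Write [z = c e (1 - P)]; for [c != 0], an atomic [h] of lower level below [e (1 - P)] gives
   [z h = c h], whereas [z h = 0] since [h] lies below finitely many [E i]. *)
move=> Hze Hz; have [c [s [Hs [Hnd Hcov]]]] := dec_line z.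
have [HPP HPe HSP] := sum_E_props Hs Hnd.
set P := \sum_(i <- s) E i in Hcov HPP HPe HSP.
have HeP : e * P = P by rewrite mulrC HPe.
have Ez : z = c *: (e * (1 - P)).
  move: Hcov; rewrite Hze mulrBl (mulr_sum_E_eq0 Hs Hz) sub0r -scalerAl HeP => Hcov.
  by rewrite -[z](subrK (c *: e)) Hcov mulrBr mulr1 HeP scalerBr addrC.
have [Ec|Hc0] := eqVneq c 0; first by rewrite Ez Ec scale0r.
have Hf := atomic_mul_compl lt_order e_atomic HPP HSP.
have [u Hu] := not_min_lt w_not_min.
have [h [Hh Hhf]] := atomic_below lt_order R_regular layers Hf Hu.
have HSh : S w h := socle_next_sub lt_order Hu (atomic_next Hh).
have [s' [Hs' [Hnd' Hcov']]] := dec_dense E_dec HSh.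
have Hhe : h * e = h by apply: (mul_idem_fix (atomic_idem e_atomic) Hhf).
rewrite Hhe in Hcov'.
have Hzh : z * h = 0 by rewrite Hcov' mulrCA (mulr_sum_E_eq0 Hs' Hz) mulr0.
have : c *: h = 0 by rewrite -Hzh Ez -scalerAl mulrC Hhf.
move/eqP; rewrite scaler_eq0 (negbTE Hc0) => /eqP Hh0.
by case: (atomic_neq0 lt_order Hh Hh0).
Qed.

Lemma family_cofinite x : exists c (s : seq I),
  forall i, valid i -> ~ List.In i s -> Bscal (lev i) c (F i x).
Proof.
have [c [s [Hs [Hnd Hcov]]]] := dec_line x.
exists c, s => i Hv Hi.
have HsE : (\sum_(j <- s) E j) * E i = 0.
  apply: sum_mulr_eq0 => j Hj; apply: (dec_orth E_dec (Hs j Hj) Hv) => Eji.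
  by apply: Hi; rewrite -Eji.
have Hxi : x * E i = c *: E i.
  have : (x * e - c *: e) * E i = 0 by rewrite Hcov -mulrA HsE mulr0.
  by rewrite mulrBl -mulrA -scalerAl e_mulE // => /eqP; rewrite subr_eq0 => /eqP.
rewrite (iso_cut (F_iso Hv)) Hxi (iso_scale (F_iso Hv)).
by have := BscalZ lt_order c (iso_one (F_iso Hv)); rewrite mulr1.
Qed.

Lemma family_separates x y : (forall i, valid i -> F i x = F i y) -> x * e = y * e.
Proof.
move=> Hxy; apply/eqP; rewrite -subr_eq0 -mulrBl; apply/eqP.
apply: dec_annihilator => [|i Hv]; first by rewrite -mulrA (atomic_idem e_atomic).
by rewrite -mulrA e_mulE // mulrBl (iso_ker (F_iso Hv) (Hxy i Hv)) subrr.
Qed.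

Lemma family_onto (y : I -> El) : (forall i, valid i -> Bset (lev i) (y i)) ->
  (exists c (s : seq I), forall i, valid i -> ~ List.In i s -> Bscal (lev i) c (y i)) ->
  exists x, forall i, valid i -> F i x = y i.
Proof.
move=> Hy [c [s Hs]].
have [xs Hxs] : exists xs : I -> R, forall i, valid i -> F i (xs i) = y i.
  apply: (choice (fun i x => valid i -> F i x = y i)) => i.
  have [Hv|Hv] := classic (valid i); last by exists 0.
  by have [x Hx] := iso_onto (F_iso Hv) (Hy i Hv); exists x.
have [s' [Hnd Hs']] := NoDup_filter_In valid s.
have Hs'v i : List.In i s' -> valid i by case/Hs'.
exists (c *: e + \sum_(i <- s') (xs i - in_alg R c) * E i) => j Hj.
rewrite (iso_cut (F_iso Hj)) mulrDl -scalerAl e_mulE //.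
have [Hin|Hin] := classic (List.In j s').
- rewrite sum_dec_in // scaler_in_alg -mulrDl addrC subrK.
  by rewrite -(iso_cut (F_iso Hj)) Hxs.
- rewrite sum_dec_out // addr0 (iso_scale (F_iso Hj)).
  apply: (Bscal_uniq lt_order (y := y j) _ (Hs j Hj (fun Hjs => Hin (proj2 (Hs' j) (conj Hjs Hj))))).
  by have := BscalZ lt_order c (iso_one (F_iso Hj)); rewrite mulr1.
Qed.

End Assembly.

Section Isomorphism.
Variables (K : fieldType) (R : comAlgType K).
Variables (W : Type) (lt : W -> W -> Prop) (wf : well_founded lt).
Hypothesis lt_order : strict_total_order lt.
Hypothesis R_regular : von_neumann_regular R.
Hypothesis layers : forall w, exists (L : Type) (phi : R -> L -> K),
  inhabited L /\ (exists e : L -> nat, injective e) /\ layer_iso wf w phi.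
Hypothesis W_countable : exists code : W -> nat, injective code.
Local Notation S := (socle_seq (R := R) wf).
Local Notation atomic := (@atomic K R W lt wf).
Local Notation iso_at := (@iso_at K R W lt wf).
Local Notation El := (El K W).
Local Notation Leaf := (@Leaf K W).

Lemma iso_min w e : is_min lt w -> atomic w e -> exists F, iso_at w e F.
Proof.
move=> Hm [He _ HnS Hline].
have Hx x : exists c, x * e = c *: e.
  by have [c /(socle_seq_min wf _ Hm)/eqP] := Hline x; rewrite subr_eq0 => /eqP; exists c.
have He0 : e != 0 by apply/eqP => He0; apply: HnS; apply/(socle_seq_min wf _ Hm).
pose coef x := epsilon (inhabits (0 : K)) (fun c => x * e = c *: e).
have Hcoef x : x * e = coef x *: e by apply: (epsilon_spec _ _ (Hx x)).
have Hceq x c : x * e = c *: e -> coef x = c.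
  move=> Hc; have : (coef x - c) *: e == 0 by rewrite scalerBl -Hcoef -Hc subrr.
  by rewrite scaler_eq0 (negbTE He0) orbF subr_eq0 => /eqP.
exists (fun x => Leaf (coef x)); split=> [x|y|x y [Hxy]|x|x y|x y|c x|].
- by apply/(Bset_min wf _ Hm); exists (coef x).
- case/(Bset_min wf _ Hm) => k ->; exists (k *: 1); congr Defs.Leaf.
  by apply: Hceq; rewrite -scalerAl mul1r.
- by rewrite Hcoef Hxy -Hcoef.
- by congr Defs.Leaf; apply/esym/Hceq; rewrite -mulrA He Hcoef.
- by congr Defs.Leaf; apply: Hceq; rewrite mulrDl !Hcoef scalerDl.
- congr Defs.Leaf; apply: Hceq.
  have -> : x * y * e = (x * e) * (y * e) by rewrite mulrACA He.
  by rewrite !Hcoef -scalerAl -scalerAr He scalerA.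
- by congr Defs.Leaf; apply: Hceq; rewrite -scalerAl Hcoef scalerA.
- by apply/(Bscal_min wf _ _ Hm); congr Defs.Leaf; apply: Hceq; rewrite He scale1r.
Qed.

(* Off [valid], [F] is [Leaf 0], as required of the components of a limit product in [Bset]. *)
Lemma decomposition_family w e (I : Type) (i0 : I) (valid : I -> Prop) (lev : I -> W)
    (code : I -> nat) :
  atomic w e -> ~ is_min lt w -> (forall i, valid i -> lt (lev i) w) -> injective code ->
  (forall Fs : seq I, exists i, valid i /\ ~ List.In i Fs) ->
  (forall u a r (Fs : seq I), atomic u a -> S w a -> (a * r) * (a * r) = a * r ->
     exists i, valid i /\ ~ List.In i Fs /\ (S (lev i) (a * r) \/ atomic (lev i) (a * r))) ->
  (forall i f, valid i -> atomic (lev i) f -> exists F, iso_at (lev i) f F) ->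
  exists E (F : I -> R -> El), [/\ atomic_decomposition wf w e valid lev E,
    forall i, valid i -> iso_at (lev i) (E i) (F i) & forall i x, ~ valid i -> F i x = Leaf 0].
Proof.
move=> He Hnm Hlev Hcode fresh0 fresh IH.
have [g [Hg Hg_gen]] := generators lt_order R_regular layers W_countable.
have g_idem k : g k * g k = g k by case: (Hg k) => [->|[u []]] //; rewrite mulr0.
have fresh_level k r (Fs : seq I) : S w (g k) -> (g k * r) * (g k * r) = g k * r ->
    exists i, valid i /\ ~ List.In i Fs /\ (S (lev i) (g k * r) \/ atomic (lev i) (g k * r)).
  move=> HSk Hid; case: (Hg k) => [Eg|[u Hu]]; last exact: (fresh u _ r Fs Hu HSk Hid).
  have [i [Hv Hi]] := fresh0 Fs; exists i; do 2!split=> //; left.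
  by rewrite Eg mul0r; apply: (rideal0 (socle_ideal R wf lt_order (lev i))).
have [E HE] := atomic_decomposition_exists lt_order R_regular layers He i0 Hlev Hcode g_idem
  (socle_generators lt_order Hg_gen Hnm) fresh_level.
have [F HF] : exists F : I -> R -> El, forall i,
    (valid i -> iso_at (lev i) (E i) (F i)) /\ (~ valid i -> F i = fun=> Leaf 0).
  apply: (choice (fun i (Fi : R -> El) =>
    (valid i -> iso_at (lev i) (E i) Fi) /\ (~ valid i -> Fi = fun=> Leaf 0))) => i.
  have [Hv|Hv] := classic (valid i); last by exists (fun=> Leaf 0).
  by have [F HF] := IH i _ Hv (dec_atomic HE Hv); exists F.
by exists E, F; split=> // [i /(proj1 (HF i))|i x /(proj2 (HF i)) ->].
Qed.

Lemma succ_fresh_level w v u a r (Fs : seq nat) : imm_pred lt v w ->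
  atomic u a -> S w a -> (a * r) * (a * r) = a * r ->
  exists i, True /\ ~ List.In i Fs /\ (S v (a * r) \/ atomic v (a * r)).
Proof.
move=> Hp Ha HSa Hid; exists (sumn Fs).+1; split=> //; split.
  by move/In_leq_sumn; rewrite ltnn.
case: (ord_lt_total lt_order u v) => [Huv|[<-|Hvu]].
- left; apply: (ridealMr (socle_ideal R wf lt_order v)).
  exact: (socle_next_sub lt_order Huv (atomic_next Ha)).
- exact: (atomic_mul_idem lt_order Ha Hid).
- by case: (atomic_notin Ha); apply/(socle_next_sub lt_order Hvu)/(socle_seq_succ wf lt_order _ Hp).
Qed.

Lemma iso_succ w v e : imm_pred lt v w -> atomic w e ->
  (forall f, atomic v f -> exists F, iso_at v f F) -> exists G, iso_at w e G.
Proof.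
move=> Hp He IH; have Hnm := imm_pred_not_min Hp.
have fresh0 (Fs : seq nat) : exists i, True /\ ~ List.In i Fs.
  by exists (sumn Fs).+1; split=> // /In_leq_sumn; rewrite ltnn.
have [E [F [HE HF _]]] := decomposition_family 0%N (valid := fun=> True) (lev := fun=> v)
  (code := id) He Hnm (fun _ _ => proj1 Hp) (fun _ _ => id) fresh0
  (fun u a r Fs => succ_fresh_level Fs Hp) (fun _ f _ => IH f).
have HF' m : iso_at v (E m) (F m) := HF m I.
exists (fun x => NodeN (fun m => F m x)).
split=> [x|_ /(Bset_succ wf lt_order _ Hp) [f [-> [Hf [c [s Hcs]]]]]|x y [/equal_f Hxy]|x|x y|x y|c x|].
- apply/(Bset_succ wf lt_order _ Hp); exists (fun m => F m x); split=> //; split.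
    by move=> m; apply: (iso_mem (HF' m)).
  by have [c [s Hcs]] := family_cofinite lt_order He HE HF x; exists c, s => m; apply: Hcs.
- have [x Hx] := family_onto lt_order HE HF (fun m _ => Hf m)
    (ex_intro _ c (ex_intro _ s (fun m _ => Hcs m))).
  by exists x; congr NodeN; apply: functional_extensionality => m; apply: Hx.
- by apply: (family_separates lt_order R_regular layers He Hnm (fun _ _ => proj1 Hp) HE HF) => m _.
- by congr NodeN; apply: functional_extensionality => m; apply: (family_cut HE HF).
- by congr NodeN; apply: functional_extensionality => m; apply: (iso_add (HF' m)).
- by congr NodeN; apply: functional_extensionality => m; apply: (iso_mul (HF' m)).
- by congr NodeN; apply: functional_extensionality => m; apply: (iso_scale (HF' m)).
- apply/(Bscal_succ wf lt_order _ _ Hp); exists (fun m => F m e); split=> // m.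
  exact: (family_one HE HF).
Qed.

Lemma limit_fresh_level w u a r (Fs : seq W) : is_limit lt w ->
  atomic u a -> S w a -> exists u', lt u' w /\ ~ List.In u' Fs /\ S u' (a * r).
Proof.
move=> Hl Ha HSa.
have Huw : lt u w.
  case: (ord_lt_total lt_order u w) => [//|[Euw|Hwu]]; case: (atomic_notin Ha).
  - by rewrite Euw.
  - exact: (socle_mono lt_order Hwu HSa).
have [u' [Hu' [Hu'w Hn]]] := limit_fresh wf lt_order Fs Hl Huw.
exists u'; do 2!split=> //; apply: (ridealMr (socle_ideal R wf lt_order u')).
exact: (socle_next_sub lt_order Hu' (atomic_next Ha)).
Qed.

Lemma iso_limit w e : is_limit lt w -> atomic w e ->
  (forall u, lt u w -> forall f, atomic u f -> exists F, iso_at u f F) -> exists G, iso_at w e G.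
Proof.
move=> Hl He IH; have Hnm : ~ is_min lt w by case: Hl.
have [u0 Hu0] := not_min_lt Hnm.
have [cW HcW] := W_countable.
have fresh0 (Fs : seq W) : exists u, lt u w /\ ~ List.In u Fs.
  by have [u [_ [Huw Hn]]] := limit_fresh wf lt_order Fs Hl Hu0; exists u.
have fresh u a r (Fs : seq W) : atomic u a -> S w a -> (a * r) * (a * r) = a * r ->
    exists u', lt u' w /\ ~ List.In u' Fs /\ (S u' (a * r) \/ atomic u' (a * r)).
  move=> Ha HSa _; have [u' [Hu'w [Hn HS]]] := limit_fresh_level r Fs Hl Ha HSa.
  by exists u'; do 2!split=> //; left.
have [E [F [HE HF Hout]]] := decomposition_family w (valid := fun u => lt u w) (lev := id)
  He Hnm (fun _ h => h) HcW fresh0 fresh (fun u f Hu => IH u Hu f).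
have pointwise (op : El -> El -> El) (fop : R -> R -> R) : op (Leaf 0) (Leaf 0) = Leaf 0 ->
    (forall u, lt u w -> forall x y, F u (fop x y) = op (F u x) (F u y)) ->
    forall x y, (fun u => F u (fop x y)) = (fun u => op (F u x) (F u y)).
  move=> H0 H x y; apply: functional_extensionality => u.
  by have [Hu|Hu] := classic (lt u w); [apply: H | rewrite !Hout].
exists (fun x => NodeW (fun u => F u x)).
split=> [x|_ /(Bset_limit wf _ Hl) [f [-> [Hf [Hf0 Hc]]]]|x y [/equal_f Hxy]|x|x y|x y|c x|].
- apply/(Bset_limit wf _ Hl); exists (fun u => F u x); split=> //; split.
    by move=> u Hu; apply: (iso_mem (HF u Hu)).
  by split; [move=> u Hu; apply: Hout | apply: (family_cofinite lt_order He HE HF x)].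
- have [x Hx] := family_onto lt_order HE HF Hf Hc.
  exists x; congr NodeW; apply: functional_extensionality => u.
  by have [Hu|Hu] := classic (lt u w); [apply: Hx | rewrite Hout // Hf0].
- exact: (family_separates lt_order R_regular layers He Hnm (fun _ h => h) HE HF (fun u _ => Hxy u)).
- congr NodeW; apply: functional_extensionality => u.
  by have [Hu|Hu] := classic (lt u w); [apply: (family_cut HE HF) | rewrite !Hout].
- by congr NodeW; apply: pointwise => [|u Hu]; [rewrite /= addr0 | apply: (iso_add (HF u Hu))].
- by congr NodeW; apply: pointwise => [|u Hu]; [rewrite /= mulr0 | apply: (iso_mul (HF u Hu))].
- congr NodeW; apply: functional_extensionality => u.
  have [Hu|Hu] := classic (lt u w); first exact: (iso_scale (HF u Hu)).
  by rewrite !Hout //= mulr0.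
- apply/(Bscal_limit wf _ _ Hl); exists (fun u => F u e); split=> //; split=> [u Hu|u Hu].
  + exact: (family_one HE HF Hu).
  + exact: Hout.
Qed.

Lemma iso_exists w e : atomic w e -> exists F, iso_at w e F.
Proof.
elim: (wf w) e => {}w _ IH e He.
case: (ord_cases lt w) => [Hm|[[v Hp]|Hl]].
- exact: (iso_min Hm He).
- exact: (iso_succ Hp He (IH v (proj1 Hp))).
- exact: (iso_limit Hl He IH).
Qed.

End Isomorphism.

(** * The top layer *)

Section TopLayer.
Variables (K : fieldType) (R : comAlgType K).
Variables (W : Type) (lt : W -> W -> Prop) (wf : well_founded lt).
Hypothesis lt_order : strict_total_order lt.
Hypothesis R_regular : von_neumann_regular R.
Local Notation S := (socle_seq (R := R) wf).
Local Notation T := (@socle_next K R W lt wf).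
Local Notation atomic := (@atomic K R W lt wf).

Section LayerUnits.
Variables (top : W) (L : Type) (phi : R -> L -> K).
Hypothesis phi_iso : layer_iso wf top phi.
Hypothesis top_full : forall x, T top x.

Lemma layer_one m : phi 1 m = 1.
Proof.
have [a [_ [Ha _]]] := atomic_layer_unit lt_order R_regular phi_iso m.
by have := layerM phi_iso m (top_full 1) (top_full a); rewrite mul1r Ha mulr1.
Qed.

Lemma layer_sum (I : Type) (B : I -> R) (s : seq I) m :
  phi (\sum_(i <- s) B i) m = \sum_(i <- s) phi (B i) m.
Proof.
elim: s => [|i s IH]; last by rewrite !big_cons (layerD phi_iso _ (top_full _) (top_full _)) IH.
by rewrite !big_nil -(scale0r 0) (layerZ phi_iso _ _ (top_full 0)) mul0r.
Qed.

Lemma orthogonal_layer_units (l : seq L) : List.NoDup l -> exists b : L -> R,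
  (forall i, List.In i l ->
     [/\ b i * b i = b i, phi (b i) i = 1 & forall m, m <> i -> phi (b i) m = 0]) /\
  (forall i j, List.In i l -> List.In j l -> i <> j -> b i * b j = 0).
Proof.
have [a Ha] := choice _ (atomic_layer_unit lt_order R_regular phi_iso).
elim: l => [|i l IH] Hnd; first by exists a.
have [Hi Hnd'] : ~ List.In i l /\ List.NoDup l by inversion Hnd.
have [b [Hb Horth]] := IH Hnd'.
set J := \sum_(j <- l) b j.
have HJJ : J * J = J by apply: sum_orth_idem => // j Hj; case: (Hb j Hj).
have HbJ j : List.In j l -> b j * J = b j.
  move=> Hj; apply: mulr_sum_delta => // [k Hk Hkj|]; first exact: Horth.
  by case: (Hb j Hj).
have HJi : phi J i = 0.
  rewrite /J layer_sum (eq_sum_In (B := fun=> 0)) ?big1 // => j Hj.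
  by case: (Hb j Hj) => _ _; apply=> Eji; apply: Hi; subst.
have [[Hai _ _ _] [Hai1 Hai0]] := Ha i.
pose b' j := if excluded_middle_informative (j = i) then a i * (1 - J) else b j.
have Eb'i : b' i = a i * (1 - J) by rewrite /b'; case: excluded_middle_informative.
have Eb'l j : List.In j l -> b' j = b j.
  by move=> Hj; rewrite /b'; case: excluded_middle_informative => // Eji; subst.
have Hb'i j : List.In j l -> b' i * b' j = 0.
  by move=> Hj; rewrite Eb'i Eb'l // -mulrA mulrBl mul1r [J * _]mulrC HbJ // subrr mulr0.
exists b'; split=> [j /= [<-|Hj]|j k /= [<-|Hj] [<-|Hk] Hjk] //.
- rewrite Eb'i; split.
  + exact: idem_mul Hai (idem_compl HJJ).
  + by rewrite (layerM phi_iso _ (top_full _) (top_full _)) (layerB lt_order phi_iso _ (top_full _) (top_full _)) layer_one HJi Hai1 subr0 mulr1.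
  + by move=> m Hm; rewrite (layerM phi_iso _ (top_full _) (top_full _)) Hai0 // mul0r.
- by rewrite Eb'l //; apply: Hb.
- exact: Hb'i.
- by rewrite mulrC Hb'i.
- by rewrite !Eb'l //; apply: Horth.
Qed.

End LayerUnits.

Lemma top_decomposition top n (phi : R -> 'I_n -> K) :
  layer_iso wf top phi -> (forall x, T top x) -> (0 < n)%N ->
  exists es : 'I_n -> R, [/\ forall i, atomic top (es i),
    forall i j, i <> j -> es i * es j = 0 & \sum_(i <- enum 'I_n) es i = 1].
Proof.
move=> Hphi Hfull Hn; set l := enum 'I_n.
have Hnd : List.NoDup l by apply/uniq_NoDup/enum_uniq.
have Hl i : List.In i l by apply/mem_In; rewrite mem_enum.
have [b [Hb Horth]] := orthogonal_layer_units Hphi Hfull Hnd.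
have Hbat j : atomic top (b j).
  by have [Hidem H1 H0] := Hb j (Hl j); apply: (atomic_of_layer_unit lt_order Hphi Hidem (Hfull _) H1 H0).
have HbP j : b j * \sum_(k <- l) b k = b j.
  apply: mulr_sum_delta => // [k _ Hkj|]; [exact: Horth | exact: atomic_idem (Hbat j)].
set r := 1 - \sum_(k <- l) b k.
have Hrb j : r * b j = 0 by rewrite /r mulrBl mul1r mulrC HbP subrr.
have Hrr : r * r = r.
  by apply/idem_compl/sum_orth_idem => // j _; apply: atomic_idem (Hbat j).
have HSr : S top r.
  apply/(layer_ker Hphi (Hfull r)) => m.
  rewrite (layerB lt_order Hphi _ (Hfull _) (Hfull _)) (layer_one Hphi Hfull).
  rewrite (layer_sum Hphi Hfull) (sum_delta Hnd (Hl m)) => [|j _ Hjm]; first by case: (Hb m (Hl m)) => _ -> _; rewrite subrr.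
  by case: (Hb j (Hl j)) => _ _; apply=> Emj; apply: Hjm.
(* The remainder [r] lies in [S_top], so it can be merged into one of the [n > 0] pieces. *)
pose i0 := Ordinal Hn.
pose es j := b j + (if j == i0 then r else 0).
exists es; split=> [j|i j Hij|].
- rewrite /es; case: eqP => [->|_]; last by rewrite addr0.
  by apply: (atomic_add_socle lt_order (Hbat i0) HSr Hrr); rewrite mulrC Hrb.
- rewrite /es; have Hb0 := Horth i j (Hl i) (Hl j) Hij.
  case: eqP => [Ei|_]; case: eqP => [Ej|_]; rewrite ?addr0.
  + by case: Hij; rewrite Ei Ej.
  + by rewrite mulrDl Hb0 Hrb addr0.
  + by rewrite mulrDr Hb0 mulrC Hrb addr0.
  + exact: Hb0.
- rewrite big_split /= (sum_delta (A := fun j => if j == i0 then r else 0) Hnd (Hl i0)).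
    by rewrite eqxx /r subrKC.
  by move=> j _ Hj; case: eqP.
Qed.

End TopLayer.

Lemma B_iso_of_decomposition (K : fieldType) (R : comAlgType K)
    (W : Type) (lt : W -> W -> Prop) (wf : well_founded lt) (top : W) (n : nat)
    (es : 'I_n -> R) :
  strict_total_order lt -> von_neumann_regular R ->
  (forall w, exists (L : Type) (phi : R -> L -> K),
     inhabited L /\ (exists e : L -> nat, injective e) /\ layer_iso wf w phi) ->
  (exists code : W -> nat, injective code) ->
  (forall i, atomic wf top (es i)) -> (forall i j, i <> j -> es i * es j = 0) ->
  \sum_(i <- enum 'I_n) es i = 1 -> exists f : R -> 'I_n -> El K W, B_iso wf top f.
Proof.
move=> lt_order R_regular layers W_countable Hat Horth Hsum.
have [F HF] := choice _ (fun i => iso_exists lt_order R_regular layers W_countable (Hat i)).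
have Hnd : List.NoDup (enum 'I_n) by apply/uniq_NoDup/enum_uniq.
have Hl i : List.In i (enum 'I_n) by apply/mem_In; rewrite mem_enum.
have Hdelta (B : 'I_n -> R) j : (\sum_(i <- enum 'I_n) B i * es i) * es j = B j * es j.
  by apply: sum_mulr_delta => // [i _ Hij|]; [exact: Horth | exact: atomic_idem (Hat j)].
exists (fun x i => F i x); repeat split.
- by move=> x i; apply: (iso_mem (HF i)).
- move=> y Hy; have [xs Hxs] := choice (fun i x => F i x = y i) (fun i => iso_onto (HF i) (Hy i)).
  by exists (\sum_(i <- enum 'I_n) xs i * es i) => i; rewrite (iso_cut (HF i)) Hdelta -(iso_cut (HF i)).
- move=> x y Hxy; rewrite -(mulr1 x) -(mulr1 y) -Hsum !mulr_sumr; apply: eq_sum_In => i _.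
  exact: (iso_ker (HF i) (Hxy i)).
- by move=> x y i; apply: (iso_add (HF i)).
- by move=> x y i; apply: (iso_mul (HF i)).
- by move=> c x i; apply: (iso_scale (HF i)).
- by move=> i; rewrite (iso_cut (HF i)) mul1r; apply: (iso_one (HF i)).
Qed.

Theorem theorem7p1 (K : fieldType) (R : comAlgType K)
  (W : Type) (lt : W -> W -> Prop) (wf : well_founded lt) (top : W) (n : nat) :
  strict_total_order lt ->
  (forall w, w = top \/ lt w top) ->
  (exists e : W -> nat, injective e) ->
  von_neumann_regular R ->
  (forall w, ~ (forall x : R, socle_seq wf w x)) ->
  (forall x : R, soc_step (socle_seq wf top) x) ->
  (forall w, exists (L : Type) (phi : R -> L -> K),
      inhabited L /\ (exists e : L -> nat, injective e) /\ layer_iso wf w phi) ->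
  (0 < n)%N ->
  (exists phi : R -> 'I_n -> K, layer_iso wf top phi) ->
  exists f : R -> 'I_n -> El K W, B_iso wf top f.
Proof.
move=> lt_order _ W_countable R_regular _ top_full layers Hn [phi Hphi].
have [es [Hat Horth Hsum]] := top_decomposition lt_order R_regular Hphi top_full Hn.
exact: (B_iso_of_decomposition lt_order R_regular layers W_countable Hat Horth Hsum).
Qed.
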